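(* Let $\kappa$ be a regular cardinal, $\mathbf m=(\mathfrak B_{\mathbf m},D_{\mathbf m})\in K^{\mathrm{ba}}_\kappa$, $\kappa_1,\kappa_2$ infinite regular cardinals with $\kappa>\kappa_1+\kappa_2$, and $\bar{\mathbf a}$ a $T_{\mathrm{ord}}$-$(\kappa_1,\kappa_2)$-moral problem in $\mathbf m$. Then: (1) there is a simple $\bar{\mathbf a}$-solving extension $\mathbf n$ of $\mathbf m$, unique up to isomorphism over $\mathfrak B_{\mathbf m}$; (2) $\mathbf n\in K^{\mathrm{ba}}_\kappa$ and $\mathbf m\le^{\mathrm{ba}}_\kappa\mathbf n$; (3) if $\theta_1,\theta_2$ are infinite regular cardinals, $\bar{\mathbf a}^*$ is a $T_{\mathrm{ord}}$-$(\theta_1,\theta_2)$-moral problem in $\mathbf m$ with no solution in $\mathbf m$, and $\theta_1\notin\{\kappa_1,\kappa_2\}$ or $\theta_2\notin\{\kappa_1,\kappa_2\}$, then $\bar{\mathbf a}^*$ has no solution in $\mathbf n$.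
   Context: $K^{\mathrm{ba}}_\kappa$ is the class of pairs $(\mathfrak B,D)$ with $\mathfrak B$ a complete Boolean algebra satisfying the $\kappa$-chain condition and $D$ a filter on $\mathfrak B$; $\mathbf m\le^{\mathrm{ba}}_\kappa\mathbf n$ means both are in $K^{\mathrm{ba}}_\kappa$, $\mathfrak B_{\mathbf m}$ is a complete (regular) subalgebra of $\mathfrak B_{\mathbf n}$ and $D_{\mathbf m}=D_{\mathbf n}\cap\mathfrak B_{\mathbf m}$. For infinite regular $\kappa_1,\kappa_2$ let $I=I(\kappa_1,\kappa_2)=I_1+I_2$ with $I_1=\{1\}\times\kappa_1$ ordered as $\kappa_1$, $I_2=\{2\}\times\kappa_2$ ordered reversely, $I_1$ before $I_2$. A $T_{\mathrm{ord}}$-$(\kappa_1,\kappa_2)$-moral problem in $(\mathfrak B,D)$ is $\langle\mathbf a_{s,t}:s<_It\rangle$, $\mathbf a_{s,t}\in D$, such that for every finite $u\subseteq I$ and $\mathbf t:\{(s,t)\in u^2:s<_It\}\to\{0,1\}$ with $\bigcap\mathbf a_{s,t}^{\mathbf t(s,t)}>0$ ($\mathbf a^1=\mathbf a$, $\mathbf a^0=1-\mathbf a$) there is $f:u\to\{0,\dots,|u|-1\}$ with $\mathbf t(s,t)=1\iff f(s)\le f(t)$. A solution is $\langle\mathbf b_s:s\in I\rangle$ with $\mathbf b_s\in D$ and $\mathbf b_{s_1}\cap\mathbf b_{s_2}\le\mathbf a_{s_1,s_2}$ for $s_1\in I_1,s_2\in I_2$. A simple $\bar{\mathbf a}$-solving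 extension of $\mathbf m$ is $\mathbf n=(\mathfrak B_{\mathbf n},D_{\mathbf n})$ where $\mathfrak B_{\mathbf n}$ is the completion of the Boolean algebra $\mathfrak B^0_{\mathbf n}$ generated by $\mathfrak B_{\mathbf m}\cup\{y_s:s\in I\}$ freely except for the equations holding in $\mathfrak B_{\mathbf m}$ and the relations $y_{s_1}\cap y_{s_2}\le\mathbf a_{s_1,s_2}$ for $s_1\in I_1,s_2\in I_2$; and $D_{\mathbf n}$ is the filter on $\mathfrak B_{\mathbf n}$ generated by $D_{\mathbf m}\cup\{y_s:s\in I\}$. *)

(* Boolean algebras are mathcomp's ctbDistrLatticeType
   (complemented, bounded, distributive lattices).  Cardinals are represented
   by types carrying a strict well-order (von Neumann initial ordinals). *)
From mathcomp Require Import all_boot all_order.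
From Stdlib Require List.
Set Implicit Arguments. Unset Strict Implicit. Unset Printing Implicit Defensive.
Import Order.TTheory.
Local Open Scope order_scope.

Definition card_le (A B : Type) : Prop := exists f : A -> B, injective f.
Definition card_lt (A B : Type) : Prop := card_le A B /\ ~ card_le B A.
Definition equinumerous (A B : Type) : Prop := exists f : A -> B, bijective f.

Definition inf_reg_card (K : Type) (lt : rel K) : Prop :=
  (forall x, ~~ lt x x) /\
      (forall x y z, lt x y -> lt y z -> lt x z) /\
      (forall x y, x <> y -> lt x y \/ lt y x) /\
      well_founded (fun x y => lt x y) /\
      (exists f : nat -> K, injective f) /\
      (* initial ordinal: every proper initial segment is of smaller size *)
      (forall x, ~ exists f : K -> K, injective f /\ forall k, lt (f k) x) /\
      (* regular: every unbounded subset has full cardinality *)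
      (forall S : K -> Prop, (forall x, exists y, S y /\ ~~ lt y x) ->
         exists f : K -> K, injective f /\ forall k, S (f k)).

(* I(k1,k2) = I_1 + I_2 : I_1 ordered as k1, I_2 ordered reversely, I_1 first *)
Definition I_lt (K1 K2 : Type) (lt1 : rel K1) (lt2 : rel K2) : rel (K1 + K2) :=
  fun s t => match s, t with
  | inl x, inl y => lt1 x y
  | inr x, inr y => lt2 y x
  | inl _, inr _ => true
  | inr _, inl _ => false
  end.

Section BA.
Context {d : Order.disp_t} (B : ctbDistrLatticeType d).

Definition is_lub (S : B -> Prop) (x : B) : Prop :=
  (forall y, S y -> y <= x) /\ (forall z, (forall y, S y -> y <= z) -> x <= z).

Definition complete_ba : Prop := forall S : B -> Prop, exists x, is_lub S x.

Definition antichain (A : B -> Prop) : Prop :=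
  (forall x, A x -> x <> \bot) /\
  (forall x y, A x -> A y -> x <> y -> x `&` y = \bot).

Definition chain_cond (K : Type) : Prop :=
  forall A : B -> Prop, antichain A ->
    ~ exists f : K -> B, injective f /\ forall k, A (f k).

Definition is_filter (D : B -> Prop) : Prop :=
  [/\ D \top, (forall x y, D x -> x <= y -> D y) &
      (forall x y, D x -> D y -> D (x `&` y))].

Definition gen_filter (G : B -> Prop) (x : B) : Prop :=
  exists u : seq B, (forall g, List.In g u -> G g) /\ \meet_(g <- u) g <= x.

Definition generated_by (G : B -> Prop) : Prop :=
  forall S : B -> Prop, (forall x, G x -> S x) -> S \bot -> S \top ->
    (forall x y, S x -> S y -> S (x `&` y)) ->
    (forall x y, S x -> S y -> S (x `|` y)) ->
    (forall x, S x -> S (~` x)) -> forall x, S x.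

Definition in_Kba (K : Type) (D : B -> Prop) : Prop :=
  [/\ complete_ba, chain_cond K & is_filter D].
End BA.

Definition ba_hom {d1 d2 : Order.disp_t} {B1 : ctbDistrLatticeType d1}
  {B2 : ctbDistrLatticeType d2} (f : B1 -> B2) : Prop :=
  [/\ (forall x y, f (x `&` y) = f x `&` f y),
      (forall x y, f (x `|` y) = f x `|` f y),
      (forall x, f (~` x) = ~` f x), f \bot = \bot & f \top = \top].

(* m <=^ba_kappa n, via the embedding h : B_m -> B_n *)
Definition le_ba (K : Type) {d1 d2 : Order.disp_t} {B1 : ctbDistrLatticeType d1}
  {B2 : ctbDistrLatticeType d2} (D1 : B1 -> Prop) (D2 : B2 -> Prop)
  (h : B1 -> B2) : Prop :=
  in_Kba K D1 /\ in_Kba K D2 /\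
  [/\ ba_hom h, injective h,
      (* the image is a complete (regular) subalgebra *)
      (forall (S : B1 -> Prop) x, is_lub S x ->
         is_lub (fun y => exists z, S z /\ y = h z) (h x)) &
      (forall x, D1 x <-> D2 (h x))].

Definition moral_problem {d : Order.disp_t} {B : ctbDistrLatticeType d}
  (K1 K2 : Type) (lt1 : rel K1) (lt2 : rel K2) (D : B -> Prop)
  (a : K1 + K2 -> K1 + K2 -> B) : Prop :=
  (forall s t, I_lt lt1 lt2 s t -> D (a s t)) /\
  forall (u : seq (K1 + K2)) (tv : K1 + K2 -> K1 + K2 -> bool), List.NoDup u ->
    \meet_(s <- u) \meet_(t <- u | I_lt lt1 lt2 s t)
       (if tv s t then a s t else ~` a s t) <> \bot ->
    exists f : K1 + K2 -> nat,
      (forall s, List.In s u -> (f s < size u)%N) /\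
      (forall s t, List.In s u -> List.In t u -> I_lt lt1 lt2 s t ->
         (tv s t = true <-> (f s <= f t)%N)).

Definition has_solution {d : Order.disp_t} {B : ctbDistrLatticeType d}
  (K1 K2 : Type) (D : B -> Prop) (a : K1 + K2 -> K1 + K2 -> B) : Prop :=
  exists b : K1 + K2 -> B, (forall s, D (b s)) /\
    forall (x : K1) (y : K2), b (inl x) `&` b (inr y) <= a (inl x) (inr y).

Definition simple_solving_ext {dm dn : Order.disp_t}
  {Bm : ctbDistrLatticeType dm} (K1 K2 : Type) (Dm : Bm -> Prop)
  (a : K1 + K2 -> K1 + K2 -> Bm)
  (Bn : ctbDistrLatticeType dn) (Dn : Bn -> Prop) (h : Bm -> Bn) : Prop :=
  exists (d0 : Order.disp_t) (B0 : ctbDistrLatticeType d0)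
         (e : Bm -> B0) (y : K1 + K2 -> B0) (j : B0 -> Bn),
  [/\ [/\ (* B0 is generated by B_m and the y_s, freely except for the equations
         of B_m and the relations y_s1 /\ y_s2 <= a_s1s2 *)
      ba_hom e,
      (forall x1 x2, y (inl x1) `&` y (inr x2) <= e (a (inl x1) (inr x2))),
      generated_by (fun z => (exists x, z = e x) \/ (exists s, z = y s)) &
      (forall (dC : Order.disp_t) (C : ctbDistrLatticeType dC)
              (g : Bm -> C) (z : K1 + K2 -> C), ba_hom g ->
         (forall x1 x2, z (inl x1) `&` z (inr x2) <= g (a (inl x1) (inr x2))) ->
         exists k : B0 -> C, [/\ ba_hom k, (forall x, k (e x) = g x) &
                                 (forall s, k (y s) = z s)])],
      (* B_n is the completion of B0: complete, with B0 densely embedded *)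
      [/\ complete_ba Bn, ba_hom j, injective j &
          (forall x : Bn, x <> \bot -> exists z : B0, z <> \bot /\ j z <= x)],
      (forall x, h x = j (e x)) &
      (forall x, Dn x <-> gen_filter (fun w => (exists v, Dm v /\ w = h v) \/
                                              (exists s, w = j (y s))) x)].

(* The algebra freely generated over B_m by elements y_s subject to
   y_s1 /\ y_s2 <= a_s1s2 (s1 in I_1, s2 in I_2) is built concretely from coefficient
   functions on finite sets of indices.  Its universal property shows that a basic
   element c /\ y_P /\ ~y_N with P, N disjoint vanishes only when c /\ pi P does, where
   pi P is the meet of the relations inside P, and basic elements are dense.  B_n is the
   completion of this algebra, unique up to isomorphism over B_m.

   Everything else is read off basic elements.  An antichain of size kappa in B_n
   refines to basic elements; as there are fewer than kappa finite pairs (P, N), kappa of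
   them share P and N, which yields the antichain c_k /\ pi P in B_m.  For (3), a solution
   in B_n lies above elements d_s /\ y_(P_s) with d_s in D_m.  If theta_1, say, is neither
   kappa_1 nor kappa_2, regularity gives an unbounded set of s on which all P_s are below
   a fixed pair (m, n) of I; transitivity of the moral problem then trades the y's for
   elements of D_m and produces a solution in B_m. *)

From HB Require Import structures.
From mathcomp Require Import all_boot all_order.
From mathcomp Require Import boolp classical_sets.
From mathcomp Require cardinality.
From Stdlib Require List.
From Stdlib Require Import Classical.
Set Implicit Arguments. Unset Strict Implicit. Unset Printing Implicit Defensive.
Import Order.TTheory Order.Theory.
Local Open Scope order_scope.

Section BooleanAlgebra.
Context {d : Order.disp_t} {B : ctbDistrLatticeType d}.
Implicit Types x y z : B.

Lemma meet_eq0_leC x y : x `&` y = \bot <-> x <= ~` y.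
Proof. by rewrite -disj_leC; split => [->|/eqP]. Qed.

Lemma le_bot x : x <= \bot -> x = \bot.
Proof. by rewrite lex0 => /eqP. Qed.

Lemma meet_compl_eq0 x y : (x `&` ~` y == \bot) = (x <= y).
Proof. by rewrite disj_leC complK. Qed.

Lemma meet_complIr x z : z `&` ~` x = z `&` ~` (x `&` z).
Proof. by rewrite complI meetUr meetxC joinx0. Qed.

Lemma bigmeet_le (T : Type) (F : T -> B) r i :
  List.In i r -> \meet_(j <- r) F j <= F i.
Proof.
elim: r => //= a r IH [->|/IH H]; rewrite big_cons; first exact: leIl.
exact: le_trans (leIr _ _) H.
Qed.

Lemma le_bigmeet (T : Type) (F : T -> B) r z :
  (forall i, List.In i r -> z <= F i) -> z <= \meet_(j <- r) F j.
Proof.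
elim: r => [|a r IH] H; first by rewrite big_nil lex1.
rewrite big_cons lexI H /=; [|by left]; apply: IH => i Hi; apply: H; by right.
Qed.

Lemma le_bigjoin (T : Type) (F : T -> B) r i :
  List.In i r -> F i <= \join_(j <- r) F j.
Proof.
elim: r => //= a r IH [->|/IH H]; rewrite big_cons; first exact: leUl.
exact: le_trans H (leUr _ _).
Qed.

Lemma bigjoin_le (T : Type) (F : T -> B) r z :
  (forall i, List.In i r -> F i <= z) -> \join_(j <- r) F j <= z.
Proof.
elim: r => [|a r IH] H; first by rewrite big_nil le0x.
rewrite big_cons leUx H /=; [|by left]; apply: IH => i Hi; apply: H; by right.
Qed.

Lemma bigjoin_meetl (T : Type) (F : T -> B) r z :
  (\join_(j <- r) F j) `&` z = \join_(j <- r) (F j `&` z).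
Proof.
elim: r => [|a r IH]; first by rewrite !big_nil meet0x.
by rewrite !big_cons meetUl IH.
Qed.

Lemma eq_bigjoin_In (T : Type) (F G : T -> B) r :
  (forall i, List.In i r -> F i = G i) -> \join_(i <- r) F i = \join_(i <- r) G i.
Proof.
elim: r => [|x r IH] H; rewrite ?big_nil // !big_cons H /=; [|by left].
by rewrite IH // => i Hi; apply: H; right.
Qed.

Lemma compl_unique x y : x `&` y = \bot -> x `|` y = \top -> y = ~` x.
Proof.
move=> H1 H2.
have E1 : y = y `&` ~` x.
  by rewrite -[LHS]meetx1 -(joinxC x) meetUr meetC H1 join0x.
have E2 : ~` x = ~` x `&` y.
  by rewrite -[LHS]meetx1 -H2 meetUr meetCx join0x.
by transitivity (y `&` ~` x); [exact: E1|rewrite meetC -E2].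
Qed.

Lemma lub_unique (S : B -> Prop) x x' : is_lub S x -> is_lub S x' -> x = x'.
Proof. by move=> [H1 H2] [H3 H4]; apply: le_anti; rewrite H2 ?H4. Qed.

Lemma lub_meet_neq0 (S : B -> Prop) x z : is_lub S x -> z `&` x <> \bot ->
  exists2 s, S s & z `&` s <> \bot.
Proof.
move=> [_ lub_x] zx0; apply: NNPP => none; apply: zx0; apply/meet_eq0_leC.
rewrite lexC; apply: lub_x => s Ss; rewrite lexC; apply/meet_eq0_leC.
by apply: NNPP => zs0; apply: none; exists s.
Qed.

Lemma chain_cond_family (K : Type) (F : K -> B) : chain_cond B K ->
  (forall k, F k <> \bot) -> (forall k k', k <> k' -> F k `&` F k' = \bot) -> False.
Proof.
move=> cc F0 Fdisj; apply: (cc (fun w => exists k, w = F k)).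
- split; first by move=> x [k ->].
  by move=> x x' [k ->] [k' ->] Hne; apply: Fdisj => Ek; apply: Hne; rewrite Ek.
- exists F; split; last by move=> k; exists k.
  move=> k k' E; apply: NNPP => Hkk; apply: (F0 k).
  by have := Fdisj k k' Hkk; rewrite -E meetxx.
Qed.

Definition sup (hB : complete_ba B) (S : B -> Prop) : B := proj1_sig (cid (hB S)).

Lemma supP (hB : complete_ba B) S : is_lub S (sup hB S).
Proof. exact: (proj2_sig (cid (hB S))). Qed.
End BooleanAlgebra.

Section Homomorphisms.
Context {d1 d2 : Order.disp_t} {B1 : ctbDistrLatticeType d1}
  {B2 : ctbDistrLatticeType d2} (f : B1 -> B2) (hf : ba_hom f).

Lemma hom_meet x y : f (x `&` y) = f x `&` f y. Proof. by case: hf. Qed.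
Lemma hom_join x y : f (x `|` y) = f x `|` f y. Proof. by case: hf. Qed.
Lemma hom_compl x : f (~` x) = ~` f x. Proof. by case: hf. Qed.
Lemma hom0 : f \bot = \bot. Proof. by case: hf. Qed.
Lemma hom1 : f \top = \top. Proof. by case: hf. Qed.

Lemma hom_le x y : x <= y -> f x <= f y.
Proof. by move/meet_l => H; rewrite -H hom_meet leIr. Qed.

Lemma hom_meets (T : Type) (F : T -> B1) r :
  f (\meet_(i <- r) F i) = \meet_(i <- r) f (F i).
Proof. elim: r => [|a r IH]; by rewrite ?big_nil ?hom1 // !big_cons hom_meet IH. Qed.

Lemma hom_eq0 : injective f -> forall x, f x = \bot -> x = \bot.
Proof. by move=> inj x; rewrite -hom0 => /inj. Qed.

Lemma hom_le_refl (f0 : forall x, f x = \bot -> x = \bot) x y :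
  f x <= f y -> x <= y.
Proof.
move=> H; rewrite -meet_compl_eq0; apply/eqP/f0.
by rewrite hom_meet hom_compl; apply/eqP; rewrite meet_compl_eq0.
Qed.
End Homomorphisms.

Lemma ba_hom_id {d} {B : ctbDistrLatticeType d} : ba_hom (@id B).
Proof. by []. Qed.

Lemma generated_hom_eq {d1 d2 : Order.disp_t} {B1 : ctbDistrLatticeType d1}
  {B2 : ctbDistrLatticeType d2} (G : B1 -> Prop) (f g : B1 -> B2) :
  generated_by G -> ba_hom f -> ba_hom g -> (forall x, G x -> f x = g x) -> f =1 g.
Proof.
move=> gen hf hg fg; apply: (gen (fun x => f x = g x)) => //.
- by rewrite (hom0 hf) (hom0 hg).
- by rewrite (hom1 hf) (hom1 hg).
- by move=> x y ex ey; rewrite (hom_meet hf) (hom_meet hg) ex ey.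
- by move=> x y ex ey; rewrite (hom_join hf) (hom_join hg) ex ey.
- by move=> x ex; rewrite (hom_compl hf) (hom_compl hg) ex.
Qed.

Definition dense {d1 d2 : Order.disp_t} {B1 : ctbDistrLatticeType d1}
  {B2 : ctbDistrLatticeType d2} (f : B1 -> B2) : Prop :=
  forall x : B2, x <> \bot -> exists z, z <> \bot /\ f z <= x.

Lemma hom_comp {d1 d2 d3 : Order.disp_t} {B1 : ctbDistrLatticeType d1}
  {B2 : ctbDistrLatticeType d2} {B3 : ctbDistrLatticeType d3}
  (f : B1 -> B2) (g : B2 -> B3) : ba_hom f -> ba_hom g -> ba_hom (g \o f).
Proof.
move=> [f1 f2 f3 f4 f5] [g1 g2 g3 g4 g5]; split=> /= *;
by rewrite ?f1 ?f2 ?f3 ?f4 ?f5 ?g1 ?g2 ?g3 ?g4 ?g5.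
Qed.

Section Completion.
Context {d : Order.disp_t} (A : ctbDistrLatticeType d).

Definition perp (X : A -> Prop) : A -> Prop := fun x => forall y, X y -> x `&` y = \bot.
Definition regular (X : A -> Prop) := perp (perp X) = X.

Lemma perp_anti (X Y : A -> Prop) : subset X Y -> subset (perp Y) (perp X).
Proof. by move=> H x Hx y /H; apply: Hx. Qed.

Lemma perp_ext (X : A -> Prop) : subset X (perp (perp X)).
Proof. by move=> x Hx y /(_ x Hx); rewrite meetC. Qed.

Lemma regular_perp (X : A -> Prop) : regular (perp X).
Proof. by apply/seteqP; split; [apply: perp_anti; apply: perp_ext|apply: perp_ext]. Qed.

Lemma perp_down (X : A -> Prop) x y : y <= x -> perp X x -> perp X y.
Proof. by move=> le Hx z /Hx H; apply: le_bot; rewrite -H; exact: leI2. Qed.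

Lemma perp0 (X : A -> Prop) : perp X \bot.
Proof. by move=> y _; rewrite meet0x. Qed.

Lemma regular_down (X : A -> Prop) x y : regular X -> X x -> y <= x -> X y.
Proof. by rewrite /regular => <- Hx le; apply: perp_down Hx. Qed.

Lemma regular0 (X : A -> Prop) : regular X -> X \bot.
Proof. by rewrite /regular => <-; apply: perp0. Qed.

Lemma regularI (X Y : A -> Prop) : regular X -> regular Y -> regular (fun x => X x /\ Y x).
Proof.
move=> hX hY; apply/seteqP; split; last exact: perp_ext.
move=> x Hx; split; [rewrite -hX|rewrite -hY]; move: x Hx;
  apply: perp_anti; apply: perp_anti; by move=> z [].
Qed.

Lemma regularT : regular (fun _ => True).
Proof. by apply/seteqP; split => //; apply: perp_ext. Qed.

Lemma regular_le (a : A) : regular (fun x => x <= a).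
Proof.
apply/seteqP; split; last exact: perp_ext.
move=> x Hx; rewrite -(complK a); apply/meet_eq0_leC; apply: Hx.
by move=> y Hy; rewrite meetC; apply/meet_eq0_leC; rewrite complK.
Qed.

(* The Dedekind-MacNeille completion: regular down-sets [X = X^perp^perp] of [A]. *)
Definition Completion := {X : A -> Prop | `[< regular X >]}.

Definition cval (X : Completion) : A -> Prop := sval X.

Lemma cvalP (X : Completion) : regular (cval X).
Proof. by case: X => X /= /asboolP. Qed.

Lemma cval_inj (X Y : Completion) : (forall x, cval X x <-> cval Y x) -> X = Y.
Proof.
case: X => X hX; case: Y => Y hY /= H.
have E : X = Y by apply: funext => x; apply: propext.
by subst; congr exist; apply: Prop_irrelevance.
Qed.

Definition mkC (X : A -> Prop) (h : regular X) : Completion :=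
  exist _ X (introT (asboolP _) h).

Definition cmeet (X Y : Completion) : Completion :=
  mkC (regularI (cvalP X) (cvalP Y)).
Definition cjoin (X Y : Completion) : Completion :=
  mkC (regular_perp (fun x => perp (cval X) x /\ perp (cval Y) x)).
Definition ccompl (X : Completion) : Completion := mkC (regular_perp (cval X)).
Definition cbot : Completion := mkC (regular_perp (fun _ => True)).
Definition ctop : Completion := mkC regularT.

HB.instance Definition _ := gen_eqMixin Completion.
HB.instance Definition _ := gen_choiceMixin Completion.

Definition cle (X Y : Completion) := cmeet X Y == X.
Definition clt (X Y : Completion) := (Y != X) && cle X Y.

Fact cle_def (X Y : Completion) : cle X Y = (cmeet X Y == X). Proof. by []. Qed.
Fact clt_def (X Y : Completion) : clt X Y = (Y != X) && cle X Y. Proof. by []. Qed.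
Fact cmeetC : commutative cmeet.
Proof. by move=> X Y; apply: cval_inj => x /=; tauto. Qed.
Fact cjoinC : commutative cjoin.
Proof. by move=> X Y; apply: cval_inj => x /=; split => H y [] *; apply: H; tauto. Qed.
Fact cmeetA : associative cmeet.
Proof. by move=> X Y Z; apply: cval_inj => x /=; tauto. Qed.
Fact cjoinA : associative cjoin.
Proof.
move=> X Y Z; apply: cval_inj => x /=.
rewrite /cval /= !(regularI (regular_perp _) (regular_perp _)).
by split => H y Hy; apply: H; tauto.
Qed.
Fact cjoinKI : forall Y X, cmeet X (cjoin X Y) = X.
Proof.
move=> Y X; apply: cval_inj => x /=; split; first by case.
by move=> Hx; split => // y [Hy _]; rewrite meetC; exact: Hy.
Qed.
Fact cmeetKU : forall Y X, cjoin X (cmeet X Y) = X.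
Proof.
move=> Y X; apply: cval_inj => x /=.
have -> : (fun z => perp (cval X) z /\ perp (fun w => cval X w /\ cval Y w) z)
   = perp (cval X).
  apply/seteqP; split => z; first by case.
  move=> Hz; split => //; move: z Hz; apply: perp_anti; by move=> w [].
by rewrite (cvalP X).
Qed.
Fact cmeetUl : left_distributive cmeet cjoin.
Proof.
move=> X Y Z; apply: cval_inj => x /=.
have dX := regular_down (cvalP X); have dY := regular_down (cvalP Y).
have dZ := regular_down (cvalP Z).
split.
- move=> [Hx HZ] w [Hw1 Hw2].
  have Hv : perp (cval X) (x `&` w) /\ perp (cval Y) (x `&` w).
    split=> j Hj.
    + rewrite -meetA meetCA; apply: Hw1.
      by split; [apply: dX Hj _; apply: leIr|apply: dZ HZ _; apply: leIl].
    + rewrite -meetA meetCA; apply: Hw2.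
      by split; [apply: dY Hj _; apply: leIr|apply: dZ HZ _; apply: leIl].
  by have := Hx _ Hv; rewrite meetA meetxx.
- move=> Hx; split.
  + move=> y [Hy1 Hy2]; apply: Hx; split.
    * by move: y Hy1 {Hy2}; apply: perp_anti => z [].
    * by move: y Hy2 {Hy1}; apply: perp_anti => z [].
  + rewrite -(cvalP Z) => t Ht; apply: Hx; split;
      by move: t Ht; apply: perp_anti => z [].
Qed.
Fact cmeetxx : idempotent_op cmeet.
Proof. by move=> X; apply: cval_inj => x /=; tauto. Qed.

HB.instance Definition _ := Order.isMeetJoinDistrLattice.Build (Order.Disp tt tt)
  Completion cle_def clt_def cmeetC cjoinC cmeetA cjoinA cjoinKI cmeetKU cmeetUl
  cmeetxx.

Lemma cleE (X Y : Completion) : X <= Y <-> subset (cval X) (cval Y).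
Proof.
rewrite /Order.le /=; split; first by move/eqP => <- x /= [].
move=> H; apply/eqP/cval_inj => x /=.
by split; [case|move=> Hx; split => //; apply: H].
Qed.

Fact cle0x (X : Completion) : cbot <= X.
Proof.
apply/cleE => x /= Hx.
have -> : x = \bot by have := Hx x I; rewrite meetxx.
exact: regular0 (cvalP X).
Qed.
Fact clex1 (X : Completion) : X <= ctop.
Proof. by apply/cleE. Qed.

HB.instance Definition _ := Order.hasBottom.Build _ Completion cle0x.
HB.instance Definition _ := Order.hasTop.Build _ Completion clex1.

Lemma cval0 x : cval \bot x <-> x = \bot.
Proof.
split => [H|->]; last by move=> y; rewrite meet0x.
by have := H x I; rewrite meetxx.
Qed.

Fact cjoinxC (X : Completion) : X `|` ccompl X = \top.
Proof.
apply: cval_inj => x /=; split => // _ y [H1 H2].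
by have := H2 y H1; rewrite meetxx => ->; rewrite meetx0.
Qed.
Fact cmeetxC (X : Completion) : X `&` ccompl X = \bot.
Proof.
apply: cval_inj => x; rewrite cval0 /=; split.
- by move=> [H1 H2]; have := H2 x H1; rewrite meetxx.
- by move=> ->; split; [apply: regular0 (cvalP X)|apply: perp0].
Qed.

HB.instance Definition _ :=
  Order.TBDistrLattice_hasComplement.Build _ Completion cjoinxC cmeetxC.

Lemma completion_complete : complete_ba Completion.
Proof.
move=> S; pose U := fun x => exists X, S X /\ cval X x.
exists (mkC (regular_perp (perp U))); split.
- by move=> X HX; apply/cleE => x Hx /=; apply: perp_ext; exists X.
- move=> Z HZ; apply/cleE => x /=; rewrite -(cvalP Z); move: x.
  apply: perp_anti; apply: perp_anti => x [X [HX Hx]].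
  by move: (HZ X HX) => /cleE; apply.
Qed.

Definition cembed (a : A) : Completion := mkC (regular_le a).

Lemma cembed_compl a : cembed (~` a) = ~` cembed a.
Proof.
apply: cval_inj => x /=; split.
- by move=> H y Hy; apply: le_bot; rewrite -(meetCx a); exact: leI2.
- by move=> H; apply/meet_eq0_leC; apply: H.
Qed.

Lemma cembed_meet a b : cembed (a `&` b) = cembed a `&` cembed b.
Proof. by apply: cval_inj => x /=; rewrite lexI; split; [move/andP|move=> [-> ->]]. Qed.

Lemma cembed_hom : ba_hom cembed.
Proof.
split.
- exact: cembed_meet.
- move=> a b; apply: compl_inj.
  by rewrite -cembed_compl !complU cembed_meet !cembed_compl.
- exact: cembed_compl.
- by apply: cval_inj => x; rewrite cval0 /= lex0; split => [/eqP|->].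
- by apply: cval_inj => x /=; rewrite lex1.
Qed.

Lemma cembed_inj : injective cembed.
Proof.
move=> a b E; have Ha : cval (cembed a) a by rewrite /= lexx.
have Hb : cval (cembed b) b by rewrite /= lexx.
by rewrite E in Ha; rewrite -E in Hb; apply: le_anti; rewrite Ha Hb.
Qed.

Lemma cembed_dense : dense cembed.
Proof.
move=> X HX; have [z [Hz Hz0]] : exists z, cval X z /\ z <> \bot.
  apply: NNPP => H; apply: HX; apply: cval_inj => x; rewrite cval0; split.
  - by move=> Hx; apply: NNPP => Hx0; apply: H; exists x.
  - by move=> ->; apply: regular0 (cvalP X).
exists z; split => //; apply/cleE => x /= Hx; exact: regular_down (cvalP X) Hz Hx.
Qed.
End Completion.

Lemma order_iso_hom {d1 d2 : Order.disp_t} {X : ctbDistrLatticeType d1}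
  {Y : ctbDistrLatticeType d2} (f : X -> Y) (g : Y -> X) :
  cancel f g -> cancel g f -> {homo f : x y / x <= y} -> {homo g : x y / x <= y} ->
  ba_hom f.
Proof.
move=> fg gf fle gle.
have fmeet x y : f (x `&` y) = f x `&` f y.
  apply: le_anti; rewrite lexI !fle ?leIl ?leIr //=.
  rewrite -[X in X <= _]gf; apply: fle; rewrite lexI.
  by apply/andP; split; [rewrite -[X in _ <= X](fg x)|rewrite -[X in _ <= X](fg y)];
    apply: gle; rewrite ?leIl ?leIr.
have fjoin x y : f (x `|` y) = f x `|` f y.
  apply: le_anti; rewrite leUx !fle ?leUl ?leUr // !andbT.
  rewrite -[X in _ <= X]gf; apply: fle; rewrite leUx.
  by apply/andP; split; [rewrite -[X in X <= _](fg x)|rewrite -[X in X <= _](fg y)];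
    apply: gle; rewrite ?leUl ?leUr.
have f0 : f \bot = \bot.
  by apply: le_anti; rewrite le0x andbT -[X in _ <= X]gf fle ?le0x.
have f1 : f \top = \top.
  by apply: le_anti; rewrite lex1 /= -[X in X <= _]gf fle ?lex1.
split => // x; apply: compl_unique; first by rewrite -fmeet meetxC.
by rewrite -fjoin joinxC.
Qed.

Section DenseExtension.
Context {dA dX dY : Order.disp_t} {A : ctbDistrLatticeType dA}
  {X : ctbDistrLatticeType dX} {Y : ctbDistrLatticeType dY}
  (jX : A -> X) (jY : A -> Y) (hX : ba_hom jX) (hY : ba_hom jY)
  (iX : injective jX) (iY : injective jY)
  (dnX : dense jX)
  (cY : complete_ba Y).

Definition dense_ext (x : X) : Y :=
  sup cY (fun w => exists a, jX a <= x /\ w = jY a).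

Lemma dense_ext_ge a x : jX a <= x -> jY a <= dense_ext x.
Proof.
move=> H; case: (supP cY (fun w => exists a, jX a <= x /\ w = jY a)) => + _.
by apply; exists a.
Qed.

Lemma dense_ext_le x y : x <= y -> dense_ext x <= dense_ext y.
Proof.
move=> H; case: (supP cY (fun w => exists a, jX a <= x /\ w = jY a)) => _; apply.
by move=> w [a [Ha ->]]; apply: dense_ext_ge; exact: le_trans H.
Qed.

Lemma dense_ext_refl b x : jY b <= dense_ext x -> jX b <= x.
Proof.
move=> H; apply: NNPP => Hn.
have Hne : jX b `&` ~` x <> \bot by move=> E; apply: Hn; rewrite -meet_compl_eq0 E.
have [c [Hc0 Hc]] := dnX Hne.
have Hcb : c <= b.
  by apply: (hom_le_refl hX (hom_eq0 hX iX)); exact: le_trans Hc (leIl _ _).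
have Hup : dense_ext x <= ~` jY c.
  case: (supP cY (fun w => exists a, jX a <= x /\ w = jY a)) => _; apply.
  move=> w [a [Ha ->]]; rewrite lexC; apply/meet_eq0_leC.
  rewrite -(hom_meet hY) -(hom0 hY); congr jY.
  apply: (hom_eq0 hX iX); apply: le_bot; rewrite (hom_meet hX).
  by rewrite -(meetCx x); apply: leI2; [exact: le_trans Hc (leIr _ _)|exact: Ha].
have : jY c <= ~` jY c.
  by apply: le_trans Hup; apply: le_trans H; exact: hom_le.
by rewrite -meet_eq0_leC meetxx => /(hom_eq0 hY iY).
Qed.

Lemma dense_lub x : is_lub (fun w => exists a, jX a <= x /\ w = jX a) x.
Proof.
split; first by move=> w [a [Ha ->]].
move=> z Hz; apply: NNPP => Hn.
have Hne : x `&` ~` z <> \bot by move=> E; apply: Hn; rewrite -meet_compl_eq0 E.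
have [c [Hc0 Hc]] := dnX Hne.
have H1 : jX c <= z by apply: Hz; exists c; split => //; exact: le_trans Hc (leIl _ _).
have H2 : jX c <= ~` z by exact: le_trans Hc (leIr _ _).
apply: Hc0; apply: (hom_eq0 hX iX); apply: le_bot; rewrite -(meetxC z).
by rewrite -(meetxx (jX c)); apply: leI2.
Qed.
End DenseExtension.

Lemma dense_ext_cancel {dA dX dY : Order.disp_t} {A : ctbDistrLatticeType dA}
  {X : ctbDistrLatticeType dX} {Y : ctbDistrLatticeType dY}
  (jX : A -> X) (jY : A -> Y) (hX : ba_hom jX) (hY : ba_hom jY)
  (iX : injective jX) (iY : injective jY)
  (dnX : dense jX)
  (dnY : dense jY)
  (cX : complete_ba X) (cY : complete_ba Y) :
  cancel (dense_ext jX jY cY) (dense_ext jY jX cX).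
Proof.
move=> x; rewrite {1}/dense_ext.
have -> : (fun w => exists a, jY a <= dense_ext jX jY cY x /\ w = jX a) =
          (fun w => exists a, jX a <= x /\ w = jX a).
  apply: funext => w; apply: propext; split => -[a [Ha ->]]; exists a; split => //.
  - exact: (dense_ext_refl hX hY iX iY dnX Ha).
  - exact: dense_ext_ge.
exact: lub_unique (supP cX _) (dense_lub hX iX dnX x).
Qed.

Lemma completion_iso {dA dX dY : Order.disp_t} {A : ctbDistrLatticeType dA}
  {X : ctbDistrLatticeType dX} {Y : ctbDistrLatticeType dY}
  (jX : A -> X) (jY : A -> Y) (hX : ba_hom jX) (hY : ba_hom jY)
  (iX : injective jX) (iY : injective jY)
  (dnX : dense jX)
  (dnY : dense jY)
  (cX : complete_ba X) (cY : complete_ba Y) :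
  exists f : X -> Y, [/\ ba_hom f, bijective f & forall a, f (jX a) = jY a].
Proof.
have fg := dense_ext_cancel hX hY iX iY dnX dnY cX cY.
have gf := dense_ext_cancel hY hX iY iX dnY dnX cY cX.
exists (dense_ext jX jY cY); split.
- by apply: order_iso_hom fg gf _ _ => x y; apply: dense_ext_le.
- by exists (dense_ext jY jX cX).
- move=> a; apply: lub_unique (supP cY _) _; split.
  + move=> w [b [Hb ->]]; apply: (hom_le hY).
    exact: (hom_le_refl hX (hom_eq0 hX iX)).
  + by move=> z; apply; exists a.
Qed.

Section Filters.
Context {d : Order.disp_t} {B : ctbDistrLatticeType d}.

Lemma filterT (D : B -> Prop) : is_filter D -> D \top.
Proof. by case. Qed.

Lemma filterI (D : B -> Prop) x y : is_filter D -> D x -> D y -> D (x `&` y).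
Proof. by case=> _ _; apply. Qed.

Lemma filter_meets (D : B -> Prop) (T : Type) (F : T -> B) r :
  is_filter D -> (forall i, List.In i r -> D (F i)) -> D (\meet_(i <- r) F i).
Proof.
move=> [D1 D2 D3]; elim: r => [|x r IH] H; first by rewrite big_nil.
rewrite big_cons; apply: D3; [apply: H; left|apply: IH => i Hi; apply: H; right] => //.
Qed.

Lemma gen_filter_filter (G : B -> Prop) : is_filter (gen_filter G).
Proof.
split.
- by exists [::]; split => //; rewrite big_nil.
- by move=> x y [u [Hu Hl]] le; exists u; split => //; apply: le_trans le.
- move=> x y [u [Hu Hl]] [v [Hv Hl']]; exists (u ++ v); split.
  + by move=> g Hg; case: (List.in_app_or _ _ _ Hg) => [/Hu|/Hv].
  + by rewrite big_cat /=; apply: leI2.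
Qed.

Lemma gen_filter_gen (G : B -> Prop) x : G x -> gen_filter G x.
Proof. by move=> H; exists [:: x]; split => [g [<-|]|] //; rewrite big_seq1. Qed.
End Filters.

Lemma gen_filter_map {d1 d2 : Order.disp_t} {X : ctbDistrLatticeType d1}
  {Y : ctbDistrLatticeType d2} (f : X -> Y) (hf : ba_hom f) (fi : injective f)
  (G : X -> Prop) (G' : Y -> Prop) (H1 : forall w, G w -> G' (f w))
  (H2 : forall w', G' w' -> exists w, G w /\ f w = w') x :
  gen_filter G x <-> gen_filter G' (f x).
Proof.
split.
- move=> [u [Hu Hl]]; exists (map f u); split.
  + by move=> g /List.in_map_iff [w [<- Hw]]; apply: H1; apply: Hu.
  + by rewrite big_map -(hom_meets hf); apply: hom_le.
- move=> [u' [Hu' Hl]].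
  have [u [Hu Eu]] : exists u, (forall w, List.In w u -> G w) /\
      \meet_(w <- u) f w = \meet_(g <- u') g.
    elim: u' Hu' {Hl} => [|g u' IH] Hu'.
      by exists [::]; split => //; rewrite !big_nil.
    have [w [Hw Ew]] := H2 g (Hu' g (or_introl erefl)).
    have [u [Hu Eu]] := IH (fun g' Hg' => Hu' g' (or_intror Hg')).
    exists (w :: u); split; first by move=> w' [<-|/Hu].
    by rewrite !big_cons Ew Eu.
  exists u; split => //; apply: (hom_le_refl hf (hom_eq0 hf fi)).
  by rewrite (hom_meets hf) Eu.
Qed.

Section RelationMeets.
Context (K1 K2 : Type) {dm : Order.disp_t} {Bm : ctbDistrLatticeType dm}
  (a : K1 + K2 -> K1 + K2 -> Bm).

Definition rel_pair (s t : K1 + K2) : Bm :=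
  match s, t with inl _, inr _ => a s t | _, _ => \top end.
Definition rel_meet (P : seq (K1 + K2)) : Bm :=
  \meet_(s <- P) \meet_(t <- P) rel_pair s t.

Lemma rel_meet_le P s t : List.In s P -> List.In t P -> rel_meet P <= rel_pair s t.
Proof.
move=> Hs Ht; apply: le_trans (bigmeet_le _ Hs) _; exact: bigmeet_le.
Qed.

Lemma le_rel_meet P z :
  (forall s t, List.In s P -> List.In t P -> z <= rel_pair s t) -> z <= rel_meet P.
Proof. by move=> H; apply: le_bigmeet => s Hs; apply: le_bigmeet => t Ht; apply: H. Qed.

Lemma rel_meet_nil : rel_meet [::] = \top. Proof. by rewrite /rel_meet big_nil. Qed.

Lemma rel_meet_sub P Q : (forall s, List.In s P -> List.In s Q) -> rel_meet Q <= rel_meet P.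
Proof. by move=> H; apply: le_rel_meet => s t Hs Ht; apply: rel_meet_le; apply: H. Qed.

End RelationMeets.

Definition solving_universal (K1 K2 : Type) {dm d0 : Order.disp_t}
  {Bm : ctbDistrLatticeType dm} {B0 : ctbDistrLatticeType d0}
  (a : K1 + K2 -> K1 + K2 -> Bm) (e : Bm -> B0) (y : K1 + K2 -> B0) : Prop :=
  forall (dC : Order.disp_t) (C : ctbDistrLatticeType dC)
         (g : Bm -> C) (z : K1 + K2 -> C), ba_hom g ->
    (forall x1 x2, z (inl x1) `&` z (inr x2) <= g (a (inl x1) (inr x2))) ->
    exists k : B0 -> C, [/\ ba_hom k, (forall x, k (e x) = g x) &
                            (forall s, k (y s) = z s)].

Section Presentation.
Context (K1 K2 : Type) {dm d0 : Order.disp_t} {Bm : ctbDistrLatticeType dm}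
  {B0 : ctbDistrLatticeType d0} (a : K1 + K2 -> K1 + K2 -> Bm)
  (e : Bm -> B0) (y : K1 + K2 -> B0) (he : ba_hom e)
  (hrel : forall x1 x2, y (inl x1) `&` y (inr x2) <= e (a (inl x1) (inr x2)))
  (huniv : solving_universal a e y).
Notation rel_meet := (rel_meet a).

Definition meet_gens (P : seq (K1 + K2)) : B0 := \meet_(s <- P) y s.
Definition meet_ngens (N : seq (K1 + K2)) : B0 := \meet_(s <- N) ~` y s.
Definition basic c P N := e c `&` meet_gens P `&` meet_ngens N.

Lemma meet_gens_cat P Q : meet_gens (P ++ Q) = meet_gens P `&` meet_gens Q.
Proof. by rewrite /meet_gens big_cat. Qed.
Lemma meet_ngens_cat P Q : meet_ngens (P ++ Q) = meet_ngens P `&` meet_ngens Q.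
Proof. by rewrite /meet_ngens big_cat. Qed.

Lemma meet_gens_le P : meet_gens P <= e (rel_meet P).
Proof.
rewrite /rel_meet (hom_meets he); apply: le_bigmeet => s Hs.
rewrite (hom_meets he); apply: le_bigmeet => t Ht.
case: s Hs => [x1|x2] Hs; case: t Ht => [y1|y2] Ht /=; rewrite ?(hom1 he) ?lex1 //.
apply: le_trans (hrel x1 y2); rewrite lexI; apply/andP; split; exact: bigmeet_le.
Qed.

Lemma basic_eq0 c P N : (forall s, List.In s P -> ~ List.In s N) ->
  basic c P N = \bot -> c `&` rel_meet P = \bot.
Proof.
move=> disj H0.
(* Evaluate in [Bm] itself, with [y_s := c /\ pi P] for [s \in P] and [\bot] otherwise. *)
pose z := fun s => if pselect (List.In s P) then c `&` rel_meet P else \bot.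
have hz : forall x1 x2, z (inl x1) `&` z (inr x2) <= a (inl x1) (inr x2).
  move=> x1 x2; rewrite /z; case: pselect => H1; case: pselect => H2;
    rewrite ?meet0x ?meetx0 ?le0x //.
  apply: le_trans (leIl _ _) _; apply: le_trans (leIr _ _) _.
  exact: (rel_meet_le a H1 H2).
have [k [hk ke ky]] := huniv (g := id) ba_hom_id hz.
have := congr1 k H0; rewrite (hom0 hk) /basic !(hom_meet hk) ke /meet_gens /meet_ngens.
rewrite !(hom_meets hk) => E; apply: le_bot; rewrite -E.
rewrite !lexI leIl /=; apply/andP; split.
- apply: le_bigmeet => s Hs; rewrite ky /z; case: pselect => // _; exact: lexx.
- apply: le_bigmeet => s Hs; rewrite (hom_compl hk) ky /z; case: pselect => H.
  + by case: (disj _ H Hs).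
  + by rewrite compl0 lex1.
Qed.

Lemma basic_neq0 c P N : basic c P N <> \bot ->
  (forall s, List.In s P -> ~ List.In s N) /\ c `&` rel_meet P <> \bot.
Proof.
move=> H; split.
- move=> s HP HN; apply: H; apply: le_bot; rewrite -(meetxC (y s)) /basic.
  apply: leI2; first (apply: le_trans (leIr _ _) _; rewrite /meet_gens).
  + exact: (bigmeet_le y HP).
  + exact: (bigmeet_le (fun s => ~` y s) HN).
- move=> E; apply: H; apply: le_bot; rewrite -(hom0 he) -E (hom_meet he) /basic.
  apply: le_trans (leIl _ _) _; apply: leI2 => //; exact: meet_gens_le.
Qed.

Lemma e_eq0 x : e x = \bot -> x = \bot.
Proof.
move=> E; have := basic_eq0 (c:=x) (P:=[::]) (N:=[::]) (fun _ _ H => H).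
rewrite rel_meet_nil meetx1; apply; by rewrite /basic E !meet0x.
Qed.

Lemma e_le_refl x x' : e x <= e x' -> x <= x'.
Proof. exact: (hom_le_refl he e_eq0). Qed.

Lemma e_meet_gens_le c P x : e c `&` meet_gens P <= e x -> c `&` rel_meet P <= x.
Proof.
move=> H; have : basic (c `&` ~` x) P [::] = \bot.
  rewrite /basic /meet_ngens big_nil meetx1 (hom_meet he) (hom_compl he).
  by apply: le_bot; rewrite -(meetxC (e x)) meetAC; exact: leI2.
move=> H0; have E := basic_eq0 (N := [::]) (fun _ _ H => H) H0.
by rewrite -meet_compl_eq0; apply/eqP; rewrite -E meetAC.
Qed.

Definition normal_form (z : B0) := exists L : seq (Bm * seq (K1 + K2) * seq (K1 + K2)),
  z = \join_(t <- L) basic t.1.1 t.1.2 t.2.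

Lemma nf0 : normal_form \bot. Proof. by exists [::]; rewrite big_nil. Qed.

Lemma nfU z z' : normal_form z -> normal_form z' -> normal_form (z `|` z').
Proof. by move=> [L ->] [L' ->]; exists (L ++ L'); rewrite big_cat. Qed.

Lemma nf_basic c P N : normal_form (basic c P N).
Proof. by exists [:: (c, P, N)]; rewrite big_seq1. Qed.

Lemma nf_joins (T : Type) (F : T -> B0) r : (forall i, List.In i r -> normal_form (F i)) ->
  normal_form (\join_(i <- r) F i).
Proof.
elim: r => [|x r IH] H; first by rewrite big_nil; exact: nf0.
rewrite big_cons; apply: nfU; [apply: H; left|apply: IH => i Hi; apply: H; right] => //.
Qed.

Lemma basic_meet c P N c' P' N' :
  basic c P N `&` basic c' P' N' = basic (c `&` c') (P ++ P') (N ++ N').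
Proof.
rewrite /basic (hom_meet he) meet_gens_cat meet_ngens_cat.
by rewrite meetACA [X in X `&` _]meetACA.
Qed.

Lemma nfI_basic c P N z : normal_form z -> normal_form (basic c P N `&` z).
Proof.
move=> [L ->]; rewrite meetC bigjoin_meetl; apply: nf_joins => t _.
rewrite meetC basic_meet; exact: nf_basic.
Qed.

Lemma nfI z z' : normal_form z -> normal_form z' -> normal_form (z `&` z').
Proof.
move=> [L ->] Hz'; rewrite bigjoin_meetl; apply: nf_joins => t _.
exact: nfI_basic.
Qed.

Lemma nf1 : normal_form \top.
Proof.
exists [:: (\top, [::], [::])].
rewrite big_seq1 /basic /meet_gens /meet_ngens !big_nil (hom1 he).
by rewrite !meetx1.
Qed.

Lemma nf_meets (T : Type) (F : T -> B0) r : (forall i, List.In i r -> normal_form (F i)) ->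
  normal_form (\meet_(i <- r) F i).
Proof.
elim: r => [|x r IH] H; first by rewrite big_nil; exact: nf1.
rewrite big_cons; apply: nfI; [apply: H; left|apply: IH => i Hi; apply: H; right] => //.
Qed.

Lemma basic_y s : basic \top [:: s] [::] = y s.
Proof. by rewrite /basic /meet_gens /meet_ngens big_seq1 big_nil (hom1 he) meet1x meetx1. Qed.

Lemma basic_ny s : basic \top [::] [:: s] = ~` y s.
Proof. by rewrite /basic /meet_gens /meet_ngens big_seq1 big_nil (hom1 he) meet1x meet1x. Qed.

Lemma basic_e c : basic c [::] [::] = e c.
Proof. by rewrite /basic /meet_gens /meet_ngens !big_nil !meetx1. Qed.

Lemma nfC z : normal_form z -> normal_form (~` z).
Proof.
move=> [L ->]; rewrite compl_joins; apply: nf_meets => t _.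
rewrite /basic !complI; apply: nfU; [apply: nfU|].
- rewrite -(hom_compl he) -basic_e; exact: nf_basic.
- rewrite /meet_gens compl_meets; apply: nf_joins => s _; rewrite -basic_ny; exact: nf_basic.
- rewrite /meet_ngens compl_meets; apply: nf_joins => s _.
  by rewrite complK -basic_y; exact: nf_basic.
Qed.

Lemma basic_meet_e c P N x : basic c P N `&` e x = basic (c `&` x) P N.
Proof. by rewrite /basic (hom_meet he) meetAC; congr (_ `&` _); rewrite meetAC. Qed.

Lemma basic_disjoint c c' P N : basic c P N <> \bot ->
  basic c P N `&` basic c' P N = \bot -> (c `&` rel_meet P) `&` (c' `&` rel_meet P) = \bot.
Proof.
move=> /basic_neq0 [disj _]; rewrite basic_meet => E.
have disj2 s : List.In s (P ++ P) -> ~ List.In s (N ++ N).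
  move=> Hs Hn; case: (List.in_app_or _ _ _ Hs) => Hs';
    case: (List.in_app_or _ _ _ Hn) => Hn'; exact: (disj _ Hs' Hn').
have Epi : rel_meet (P ++ P) = rel_meet P.
  apply: le_anti; apply/andP; split; apply: rel_meet_sub => x Hx.
  + by apply: List.in_or_app; left.
  + by case: (List.in_app_or _ _ _ Hx).
by rewrite meetACA meetxx -Epi; apply: basic_eq0 disj2 E.
Qed.

Hypothesis hgen : generated_by (fun z => (exists x, z = e x) \/ (exists s, z = y s)).

Lemma nf_all z : normal_form z.
Proof.
apply: hgen z.
- move=> z [[x ->]|[s ->]]; [rewrite -basic_e|rewrite -basic_y]; exact: nf_basic.
- exact: nf0.
- exact: nf1.
- exact: nfI.
- exact: nfU.
- exact: nfC.
Qed.

Lemma basic_below z : z <> \bot ->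
  exists c P N, basic c P N <> \bot /\ basic c P N <= z.
Proof.
move=> Hz; have [L E] := nf_all z.
apply: NNPP => Hn; apply: Hz; rewrite E; apply: le_bot; apply: bigjoin_le => t Ht.
rewrite lex0; apply/eqP; apply: NNPP => Hb; apply: Hn; exists t.1.1, t.1.2, t.2; split => //.
rewrite E; exact: (le_bigjoin (fun t => basic t.1.1 t.1.2 t.2) Ht).
Qed.
End Presentation.

Lemma card_le_trans A B C : card_le A B -> card_le B C -> card_le A C.
Proof. by move=> [f hf] [g hg]; exists (g \o f); apply: inj_comp. Qed.

Lemma card_le_setT (A B : Type) :
  card_le A B -> cardinality.card_le [set: A] [set: B].
Proof.
move=> [f fi]; rewrite -(cardinality.card_le_eql (cardinality.inj_card_eq (in2W fi))).
exact: cardinality.card_leT.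
Qed.

Lemma card_le_anti (A B : Type) : card_le A B -> card_le B A -> equinumerous A B.
Proof.
move=> AB BA.
have /cardinality.card_bijP[f [g fg gf]] :=
  cardinality.Cantor_Bernstein (card_le_setT AB) (card_le_setT BA).
pose inT (T : Type) (x : T) : classical_sets.setT :=
  SigSub (mem_set (I : classical_sets.setT x)).
have inTK (T : Type) (x : @classical_sets.setT T) : inT T (val x) = x by apply: val_inj.
exists (fun x => val (f (inT A x))), (fun y => val (g (inT B y))) => x /=.
  by rewrite inTK fg.
by rewrite inTK gf.
Qed.

Section RegularCardinal.
Context (T : Type) (ltT : rel T) (hT : inf_reg_card ltT).

Definition unbounded (U : T -> Prop) := forall x, exists y, U y /\ ~~ ltT y x.

Lemma reg_ltxx x : ~~ ltT x x. Proof. by case: hT => H _; apply: H. Qed.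
Lemma reg_lt_trans x y z : ltT x y -> ltT y z -> ltT x z.
Proof. by case: hT => _ [H _]; apply: H. Qed.
Lemma reg_lt_total x y : x <> y -> ltT x y \/ ltT y x.
Proof. by case: hT => _ [_ [H _]]; apply: H. Qed.
Lemma reg_unbounded_card U :
  unbounded U -> exists f : T -> T, injective f /\ forall k, U (f k).
Proof. by case: hT => _ [_ [_ [_ [_ [_ H]]]]]; apply: H. Qed.
Lemma reg_nat_le : card_le nat T.
Proof. by case: hT => _ [_ [_ [_ [H _]]]]. Qed.

Lemma reg_le_trans x y z :
  ltT x y \/ x = y -> ltT y z \/ y = z -> ltT x z \/ x = z.
Proof.
move=> [H1|<-] [H2|<-]; by [left; exact: reg_lt_trans H1 H2|left|right].
Qed.

Lemma reg_nlt_eq x y : ~~ ltT y x -> ~~ ltT x y -> x = y.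
Proof.
move=> Hyx Hxy; apply: NNPP => /reg_lt_total [H|H]; by [move/negP: Hxy|move/negP: Hyx].
Qed.

Lemma seq_bounded (X : Type) (p : X -> option T) (Q : seq X) :
  exists m, forall t k, List.In t Q -> p t = Some k -> ltT k m \/ k = m.
Proof.
have [k0 _] := reg_nat_le.
elim: Q => [|t Q [m Hm]]; first by exists (k0 0).
case E: (p t) => [k|]; last first.
  by exists m => t' k' [<-|Ht]; [rewrite E|exact: Hm].
case: (classic (ltT k m \/ k = m)) => Hkm.
  by exists m => t' k' [<-|Ht]; [rewrite E => -[<-]|exact: Hm].
have Hmk : ltT m k.
  have [Ekm|/reg_lt_total [H|//]] := classic (k = m).
    by case: Hkm; right.
  by case: Hkm; left.
exists k => t' k' [<-|Ht]; first by rewrite E => -[<-]; right.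
by move=> /(Hm _ _ Ht) H; apply: reg_le_trans H _; left.
Qed.

Lemma unboundedT : unbounded (fun _ => True).
Proof. by move=> x; exists x; split => //; exact: reg_ltxx. Qed.

Lemma not_unbounded U : ~ unbounded U -> exists b, forall t, U t -> ltT t b.
Proof.
move=> H; apply: NNPP => H'; apply: H => x; apply: NNPP => Hx; apply: H'.
exists x => t Ht; apply: NNPP => Hl; apply: Hx; exists t; split => //.
by apply/negP => Hl'; apply: Hl.
Qed.

Lemma unbounded_fiber (X : Type) (hX : ~ card_le T X) (F : T -> X) U :
  unbounded U -> exists x, unbounded (fun t => U t /\ F t = x).
Proof.
move=> hU; apply: NNPP => Hn.
have Hb : forall x, exists b, forall t, U t /\ F t = x -> ltT t b.
  by move=> x; apply: not_unbounded => Hx; apply: Hn; exists x.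
have [beta Hbeta] := choice Hb.
case: (classic (unbounded (fun w => exists x, beta x = w))) => Hr.
- have [phi [phii Hphi]] := reg_unbounded_card Hr.
  have [psi Hpsi] := choice Hphi.
  by apply: hX; exists psi => k k' E; apply: phii; rewrite -Hpsi -(Hpsi k') E.
- have [g Hg] := not_unbounded Hr.
  have [t [Ut Ht]] := hU g.
  have H1 := Hbeta (F t) t (conj Ut erefl).
  have H2 := Hg (beta (F t)) (ex_intro _ _ erefl).
  by move: Ht; rewrite (reg_lt_trans H1 H2).
Qed.

Lemma unbounded_prefix_fiber (X : Type) (hX : ~ card_le T X) (x0 : X)
  (F : T -> seq X) n U : unbounded U -> (forall t, U t -> size (F t) = n) ->
  forall i, exists U' p, [/\ unbounded U', (forall t, U' t -> U t) &
                             (forall t, U' t -> take i (F t) = p)].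
Proof.
move=> hU Un; elim => [|i [U' [p [HU' Hsub Hp]]]].
  by exists U, [::]; split => // t _; rewrite take0.
have [x Hx] := unbounded_fiber hX (fun t => nth x0 (F t) i) HU'.
exists (fun t => U' t /\ nth x0 (F t) i = x), (if (i < n)%N then rcons p x else p).
split => // [t [Ht _]|t [Ht Hxt]]; first exact: Hsub.
have Hs := Un t (Hsub t Ht); case: (ltnP i n) => Hin.
- by rewrite (take_nth x0) ?Hs // Hp // Hxt.
- by rewrite -(Hp t Ht) !take_oversize // Hs //; exact: leqW.
Qed.

Lemma seq_fiber (X : Type) (hX1 : ~ card_le T X) (hX2 : card_le nat X)
  (F : T -> seq X) U : unbounded U -> exists p, unbounded (fun t => U t /\ F t = p).
Proof.
move=> hU.
have hN : ~ card_le T nat by move=> H; apply: hX1; exact: card_le_trans H hX2.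
have [n Hn] := unbounded_fiber hN (fun t => size (F t)) hU.
have [f0 _] := hX2.
have [U' [p [HU' Hsub Hp]]] :=
  unbounded_prefix_fiber hX1 (f0 0) Hn (fun t Ht => proj2 Ht) n.
exists p => x; have [t [Ht Hl]] := HU' x; exists t; split => //.
have [Ut Hs] := Hsub t Ht; split => //.
by rewrite -(Hp t Ht) -Hs take_size.
Qed.
End RegularCardinal.

Lemma bounded_sub (T K : Type) (ltT : rel T) (ltK : rel K)
  (hT : inf_reg_card ltT) (hK : inf_reg_card ltK) (hne : ~ equinumerous T K)
  (F : T -> K) U : unbounded ltT U ->
  exists U', unbounded ltT U' /\ (forall t, U' t -> U t) /\
    exists m, forall t, U' t -> ltK (F t) m \/ F t = m.
Proof.
move=> hU.
case: (classic (exists m, forall t, U t -> ltK (F t) m \/ F t = m)) => Hm.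
  by exists U; split => //; split.
have Hr : unbounded ltK (fun k => exists t, U t /\ F t = k).
  move=> m; apply: NNPP => H; apply: Hm; exists m => t Ut.
  apply: NNPP => Hn; apply: H; exists (F t); split; first by exists t.
  by apply/negP => Hl; apply: Hn; left.
have [phi [phii Hphi]] := reg_unbounded_card hK Hr.
have [psi Hpsi] := choice Hphi.
have hKT : card_le K T.
  exists psi => k k' E; apply: phii.
  by rewrite -(proj2 (Hpsi k)) -(proj2 (Hpsi k')) E.
have hTK : ~ card_le T K by move=> H; apply: hne; exact: card_le_anti.
have [x Hx] := unbounded_fiber hT hTK F hU.
exists (fun t => U t /\ F t = x); split => //; split; first by move=> t [].
by exists x => t [_ ->]; right.
Qed.

Section IOrder.
Context (K1 K2 : Type) (lt1 : rel K1) (lt2 : rel K2)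
  (h1 : inf_reg_card lt1) (h2 : inf_reg_card lt2).
Notation Ilt := (I_lt lt1 lt2).

Lemma Ilt_irr s : Ilt s s = false.
Proof. by case: s => x /=; apply/negbTE; apply: reg_ltxx. Qed.

Lemma Ilt_trans s t r : Ilt s t -> Ilt t r -> Ilt s r.
Proof.
case: s => x; case: t => y; case: r => z //=.
- exact: reg_lt_trans.
- by move=> H1 H2; exact: reg_lt_trans H2 H1.
Qed.

Lemma Ilt_asym s t : Ilt s t -> Ilt t s = false.
Proof. by move=> H; apply/negbTE/negP => /(Ilt_trans H); rewrite Ilt_irr. Qed.

Section MoralProblem.
Context {d : Order.disp_t} {B : ctbDistrLatticeType d} (D : B -> Prop)
  (a : K1 + K2 -> K1 + K2 -> B) (ha : moral_problem lt1 lt2 D a).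

Lemma moral_D s t : Ilt s t -> D (a s t).
Proof. by case: ha => H _; apply: H. Qed.

(* The consistency condition for [s < t < r], with [a s r] alone negated, admits
   no order [f s <= f t <= f r < f s]. *)
Lemma moral_trans s t r : Ilt s t -> Ilt t r -> a s t `&` a t r <= a s r.
Proof.
move=> Hst Htr; have Hsr := Ilt_trans Hst Htr.
have nst : s <> t by move=> E; move: Hst; rewrite E Ilt_irr.
have ntr : t <> r by move=> E; move: Htr; rewrite E Ilt_irr.
have nsr : s <> r by move=> E; move: Hsr; rewrite E Ilt_irr.
pose tv p q := if pselect (p = s /\ q = r) then false else true.
have Tst : tv s t = true by rewrite /tv; case: pselect => // H; case: (ntr (proj2 H)).
have Ttr : tv t r = true by rewrite /tv; case: pselect => // H; case: (nst (esym (proj1 H))).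
have Tsr : tv s r = false by rewrite /tv; case: pselect => // NE; exfalso; exact: NE.
have ND : List.NoDup [:: s; t; r].
  constructor; first by move=> /= [E|[E|[]]]; [apply: nst|apply: nsr].
  by constructor; [move=> /= [E|[]]; apply: ntr|constructor => //; constructor].
rewrite -meet_compl_eq0; apply/eqP; apply: NNPP => Hw.
have Hne : \meet_(p <- [:: s; t; r]) \meet_(q <- [:: s; t; r] | Ilt p q)
       (if tv p q then a p q else ~` a p q) <> \bot.
  move=> E; apply: Hw; apply: le_bot; rewrite -E; apply: le_bigmeet => p Hp.
  rewrite big_mkcond /=; apply: le_bigmeet => q Hq.
  move: Hp Hq => /= [<-|[<-|[<-|[]]]] [<-|[<-|[<-|[]]]];
    rewrite ?Hst ?Htr ?Hsr ?Ilt_irr ?(Ilt_asym Hst) ?(Ilt_asym Htr)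
      ?(Ilt_asym Hsr) ?lex1 ?Tst ?Ttr ?Tsr //.
  - by rewrite -meetA; apply: leIl.
  - exact: leIr.
  - by apply: (le_trans (leIl _ _)); apply: leIr.
case: ha => _ /(_ _ tv ND Hne) [f [_ Hf]].
have Is : List.In s [:: s; t; r] by left.
have It : List.In t [:: s; t; r] by right; left.
have Ir : List.In r [:: s; t; r] by right; right; left.
have fst := proj1 (Hf s t Is It Hst) Tst.
have ftr := proj1 (Hf t r It Ir Htr) Ttr.
by move: (proj2 (Hf s r Is Ir Hsr) (leq_trans fst ftr)); rewrite Tsr.
Qed.

Lemma moral_le_left x u y : ~~ lt1 u x ->
  (if lt1 x u then a (inl x) (inl u) else \top) `&` a (inl u) (inr y)
    <= a (inl x) (inr y).
Proof.
case: ifP => [Hxu _|Hxu Hux]; first exact: (moral_trans (t := inl u)).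
by rewrite (reg_nlt_eq h1 Hux (negbT Hxu)) meet1x.
Qed.

Lemma moral_le_right x u y : ~~ lt2 u y ->
  a (inl x) (inr u) `&` (if lt2 y u then a (inr u) (inr y) else \top)
    <= a (inl x) (inr y).
Proof.
case: ifP => [Hyu _|Hyu Huy]; first exact: (moral_trans (t := inr u)).
by rewrite (reg_nlt_eq h2 Huy (negbT Hyu)) meetx1.
Qed.
End MoralProblem.
End IOrder.

Section SolutionTransfer.
Context (K1 K2 : Type) (lt1 : rel K1) (lt2 : rel K2)
  (h1 : inf_reg_card lt1) (h2 : inf_reg_card lt2)
  {dm : Order.disp_t} {Bm : ctbDistrLatticeType dm} (Dm : Bm -> Prop)
  (fm : is_filter Dm) (a : K1 + K2 -> K1 + K2 -> Bm)
  (ha : moral_problem lt1 lt2 Dm a).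
Notation rel_meet := (rel_meet a).

(* For index sets bounded by [(m, n)], the relations between them factor through
   [m] or [n] by transitivity; [rel_below] and [rel_across] are the two halves. *)
Definition cut_below (m : K1) (n : K2) (t : K1 + K2) : Bm :=
  match t with
  | inl k => if lt1 k m then a (inl k) (inl m) else \top
  | inr k => if lt2 k n then a (inr n) (inr k) else \top end.
Definition cut_across (m : K1) (n : K2) (t : K1 + K2) : Bm :=
  match t with inl k => a (inl k) (inr n) | inr k => a (inl m) (inr k) end.
Definition rel_below m n Q := rel_meet Q `&` \meet_(t <- Q) cut_below m n t.
Definition rel_across m n Q := rel_meet Q `&` \meet_(t <- Q) cut_across m n t.
Definition bounded_by m n (Q : seq (K1 + K2)) := forall t, List.In t Q ->
  match t with inl k => lt1 k m \/ k = m | inr k => lt2 k n \/ k = n end.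

Lemma rel_below_across_pair m n Q R s t : bounded_by m n Q ->
  List.In s Q \/ List.In s R -> List.In t Q \/ List.In t R ->
  rel_below m n Q `&` rel_across m n R <= rel_pair a s t.
Proof.
move=> hb Hs Ht.
case: s Hs => [k1|k2] Hs; case: t Ht => [l1|l2] Ht /=; rewrite ?lex1 //.
have belowQ s : List.In s Q -> rel_below m n Q `&` rel_across m n R <= cut_below m n s.
  move=> Hs'; apply: le_trans (leIl _ _) _; apply: le_trans (leIr _ _) _.
  exact: (bigmeet_le (cut_below m n) Hs').
have acrossR s : List.In s R -> rel_below m n Q `&` rel_across m n R <= cut_across m n s.
  move=> Hs'; apply: le_trans (leIr _ _) _; apply: le_trans (leIr _ _) _.
  exact: (bigmeet_le (cut_across m n) Hs').
case: Hs => Hs; case: Ht => Ht.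
- apply: le_trans (leIl _ _) _; apply: le_trans (leIl _ _) _.
  exact: (rel_meet_le a Hs Ht).
- have := belowQ _ Hs; have := acrossR _ Ht => /= A2 A1.
  case: (hb _ Hs) => [Hk|->] //; rewrite Hk in A1.
  apply: le_trans (moral_trans h1 h2 ha (t := inl m) _ _) => //.
  by rewrite lexI A1 A2.
- have := belowQ _ Ht; have := acrossR _ Hs => /= A2 A1.
  case: (hb _ Ht) => [Hk|->] //; rewrite Hk in A1.
  apply: le_trans (moral_trans h1 h2 ha (t := inr n) _ _) => //.
  by rewrite lexI A1 A2.
- apply: le_trans (leIr _ _) _; apply: le_trans (leIl _ _) _.
  exact: (rel_meet_le a Hs Ht).
Qed.

Lemma rel_below_across_le m n Q R : bounded_by m n Q ->
  rel_below m n Q `&` rel_across m n R <= rel_meet (Q ++ R) /\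
  rel_below m n Q `&` rel_across m n R <= rel_meet (R ++ Q).
Proof.
move=> hb; split; apply: le_rel_meet => s t Hs Ht; apply: rel_below_across_pair => //;
  case: (List.in_app_or _ _ _ Hs); case: (List.in_app_or _ _ _ Ht); tauto.
Qed.

Lemma rel_meet_D Q : Dm (rel_meet Q).
Proof.
apply: filter_meets => // s _; apply: filter_meets => // t _.
by case: s => [k1|k2]; case: t => [l1|l2] /=; try exact: filterT;
  apply: (moral_D ha).
Qed.

Lemma rel_below_D m n Q : Dm (rel_below m n Q).
Proof.
apply: filterI => //; first exact: rel_meet_D.
apply: filter_meets => // [[k|k]] _ /=; case: ifP => H;
  by [apply: (moral_D ha)|exact: filterT].
Qed.

Lemma rel_across_D m n Q : Dm (rel_across m n Q).
Proof.
apply: filterI => //; first exact: rel_meet_D.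
by apply: filter_meets => // [[k|k]] _ /=; apply: (moral_D ha).
Qed.

Lemma unbounded_bounded_by (T : Type) (ltT : rel T) (hT : inf_reg_card ltT)
  (n1 : ~ equinumerous T K1) (n2 : ~ equinumerous T K2) (P : T -> seq (K1 + K2)) :
  exists U, unbounded ltT U /\ exists m n, forall u, U u -> bounded_by m n (P u).
Proof.
have Ex1 x : exists m, forall t k, List.In t (P x) -> t = inl k -> lt1 k m \/ k = m.
  have [m Hm] := seq_bounded h1 (fun t => if t is inl k then Some k else None) (P x).
  by exists m => t k Ht E; apply: (Hm t) => //; rewrite E.
have Ex2 x : exists n, forall t k, List.In t (P x) -> t = inr k -> lt2 k n \/ k = n.
  have [n Hn] := seq_bounded h2 (fun t => if t is inr k then Some k else None) (P x).
  by exists n => t k Ht E; apply: (Hn t) => //; rewrite E.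
have [F1 HF1] := choice Ex1; have [F2 HF2] := choice Ex2.
have [U1 [HU1 [_ [m Hm]]]] := bounded_sub hT h1 n1 F1 (unboundedT hT).
have [U2 [HU2 [Hs2 [n Hn]]]] := bounded_sub hT h2 n2 F2 HU1.
exists U2; split => //; exists m, n => u Hu [k|k] Ht /=.
- exact: (reg_le_trans h1 (HF1 u _ k Ht erefl) (Hm u (Hs2 u Hu))).
- exact: (reg_le_trans h2 (HF2 u _ k Ht erefl) (Hn u Hu)).
Qed.

Context (T1 T2 : Type) (lt1' : rel T1) (lt2' : rel T2)
  (hT1 : inf_reg_card lt1') (hT2 : inf_reg_card lt2')
  (a' : T1 + T2 -> T1 + T2 -> Bm) (ha' : moral_problem lt1' lt2' Dm a')
  (dd : T1 + T2 -> Bm) (P : T1 + T2 -> seq (K1 + K2)) (Hd : forall s, Dm (dd s))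
  (Hdd : forall x y, dd (inl x) `&` dd (inr y) `&` rel_meet (P (inl x) ++ P (inr y))
                     <= a' (inl x) (inr y)).

Lemma solution_of_bounded_left :
  ~ equinumerous T1 K1 -> ~ equinumerous T1 K2 -> has_solution Dm a'.
Proof.
move=> n1 n2; have [U [HU [m [n Hb]]]] := unbounded_bounded_by hT1 n1 n2 (P \o inl).
have [ux Hux] := choice HU.
exists (fun s => match s with
  | inl x => dd (inl (ux x)) `&` rel_below m n (P (inl (ux x))) `&`
             (if lt1' x (ux x) then a' (inl x) (inl (ux x)) else \top)
  | inr y => dd (inr y) `&` rel_across m n (P (inr y)) end); split.
- case=> [x|y] /=; last by apply: filterI => //; exact: rel_across_D.
  apply: filterI => //; first by apply: filterI => //; exact: rel_below_D.
  by case: ifP => Hl; [apply: (moral_D ha')|exact: filterT].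
- move=> x y; have [Uu Hnu] := Hux x; move: (ux x) Uu Hnu => u Uu Hnu.
  have W : dd (inl u) `&` rel_below m n (P (inl u)) `&`
           (dd (inr y) `&` rel_across m n (P (inr y))) <= a' (inl u) (inr y).
    apply: le_trans (Hdd u y); rewrite !lexI; apply/andP; split; first (apply/andP; split).
    - by apply: le_trans (leIl _ _) _; apply: leIl.
    - by apply: le_trans (leIr _ _) _; apply: leIl.
    - apply: le_trans (proj1 (rel_below_across_le _ (Hb u Uu))).
      by apply: leI2; exact: leIr.
  apply: le_trans (moral_le_left hT1 hT2 ha' y Hnu); rewrite lexI; apply/andP; split.
  + by apply: le_trans (leIl _ _) _; apply: leIr.
  + by apply: le_trans W; apply: leI2 => //; exact: leIl.
Qed.

Lemma solution_of_bounded_right :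
  ~ equinumerous T2 K1 -> ~ equinumerous T2 K2 -> has_solution Dm a'.
Proof.
move=> n1 n2; have [U [HU [m [n Hb]]]] := unbounded_bounded_by hT2 n1 n2 (P \o inr).
have [uy Huy] := choice HU.
exists (fun s => match s with
  | inl x => dd (inl x) `&` rel_across m n (P (inl x))
  | inr y => dd (inr (uy y)) `&` rel_below m n (P (inr (uy y))) `&`
             (if lt2' y (uy y) then a' (inr (uy y)) (inr y) else \top) end); split.
- case=> [x|y] /=; first by apply: filterI => //; exact: rel_across_D.
  apply: filterI => //; first by apply: filterI => //; exact: rel_below_D.
  by case: ifP => Hl; [apply: (moral_D ha')|exact: filterT].
- move=> x y; have [Uu Hnu] := Huy y; move: (uy y) Uu Hnu => u Uu Hnu.
  have W : dd (inl x) `&` rel_across m n (P (inl x)) `&`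
           (dd (inr u) `&` rel_below m n (P (inr u))) <= a' (inl x) (inr u).
    apply: le_trans (Hdd x u); rewrite !lexI; apply/andP; split; first (apply/andP; split).
    - by apply: le_trans (leIl _ _) _; apply: leIl.
    - by apply: le_trans (leIr _ _) _; apply: leIl.
    - apply: le_trans (proj2 (rel_below_across_le (P (inl x)) (Hb u Uu))).
      by rewrite meetC; apply: leI2; exact: leIr.
  apply: le_trans (moral_le_right hT1 hT2 ha' x Hnu); rewrite lexI; apply/andP; split.
  + by apply: le_trans W; apply: leI2 => //; exact: leIl.
  + by apply: le_trans (leIr _ _) _; apply: leIr.
Qed.

Lemma solution_of_bounded :
  (~ equinumerous T1 K1 /\ ~ equinumerous T1 K2) \/
  (~ equinumerous T2 K1 /\ ~ equinumerous T2 K2) -> has_solution Dm a'.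
Proof.
by case=> -[n1 n2]; [exact: solution_of_bounded_left|exact: solution_of_bounded_right].
Qed.
End SolutionTransfer.

Definition inb {T : Type} (w : T) (P : seq T) : bool := `[< List.In w P >].

Lemma inbP {T : Type} (w : T) P : reflect (List.In w P) (inb w P).
Proof. exact: asboolP. Qed.

Section FreeExtension.
Context (K1 K2 : Type) {dm : Order.disp_t} {Bm : ctbDistrLatticeType dm}
  (a : K1 + K2 -> K1 + K2 -> Bm).
Notation I := (K1 + K2)%type.
Notation pi := (rel_meet a).

(* An element of the free extension is given by its coefficients: [F P <= pi P] is
   its coefficient at the valuation making exactly the generators [y_s], [s \in P],
   true, and it depends on [P] only through its trace on a finite set [W]. *)
Definition determined_on (W : seq I) (F : seq I -> Bm) := forall P P',
  (forall w, List.In w W -> (List.In w P <-> List.In w P')) ->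
  F P `&` pi P' = F P' `&` pi P.
Definition coeff_fun (F : seq I -> Bm) :=
  (forall P, F P <= pi P) /\ exists W, determined_on W F.

Lemma determined_on_sub W V F : (forall w, List.In w W -> List.In w V) ->
  determined_on W F -> determined_on V F.
Proof. by move=> WV H P P' HV; apply: H => w /WV; apply: HV. Qed.

Lemma determined_on_catl W1 W2 F : determined_on W1 F -> determined_on (W1 ++ W2) F.
Proof. by apply: determined_on_sub => w Hw; apply: List.in_or_app; left. Qed.

Lemma determined_on_catr W1 W2 F : determined_on W2 F -> determined_on (W1 ++ W2) F.
Proof. by apply: determined_on_sub => w Hw; apply: List.in_or_app; right. Qed.

Lemma determined_onI W F G : determined_on W F -> determined_on W G ->
  determined_on W (fun P => F P `&` G P).
Proof.
move=> h1 h2 P P' H.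
by rewrite -(meetxx (pi P')) meetACA (h1 P P' H) (h2 P P' H) meetACA meetxx.
Qed.

Lemma determined_onU W F G : determined_on W F -> determined_on W G ->
  determined_on W (fun P => F P `|` G P).
Proof. by move=> h1 h2 P P' H; rewrite !meetUl (h1 P P' H) (h2 P P' H). Qed.

Lemma determined_onC W F : (forall P, F P <= pi P) -> determined_on W F ->
  determined_on W (fun P => pi P `&` ~` F P).
Proof.
move=> Fle H P P' HW; set z := pi P `&` pi P'.
have -> : pi P `&` ~` F P `&` pi P' = z `&` ~` F P by rewrite /z meetAC.
have -> : pi P' `&` ~` F P' `&` pi P = z `&` ~` F P'.
  by rewrite /z meetAC (meetC (pi P')).
rewrite (meet_complIr (F P)) (meet_complIr (F P')); congr (_ `&` ~` _).
by rewrite /z meetA (meet_l (Fle P)) (H P P' HW) (meetC (pi P)) meetA (meet_l (Fle P')).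
Qed.

Lemma determined_on_gen s : determined_on [:: s] (fun P => if inb s P then pi P else \bot).
Proof.
move=> P P' H; have [H1 H2] := H s (or_introl erefl).
have -> : inb s P = inb s P'.
  by apply/idP/idP => /inbP Hs; apply/inbP; [exact: H1|exact: H2].
by case: ifP => _; rewrite ?meet0x // meetC.
Qed.

Definition FreeExt := {F : seq I -> Bm | `[< coeff_fun F >]}.
Definition coeff (F : FreeExt) : seq I -> Bm := sval F.
Lemma coeffP (F : FreeExt) : coeff_fun (coeff F).
Proof. by case: F => F /= /asboolP. Qed.
Lemma coeff_le (F : FreeExt) P : coeff F P <= pi P.
Proof. by case: (coeffP F) => H _; apply: H. Qed.
Lemma coeffI_rel (F : FreeExt) P : coeff F P `&` pi P = coeff F P.
Proof. by apply: meet_l; apply: coeff_le. Qed.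

Lemma coeff_inj (F G : FreeExt) : (forall P, coeff F P = coeff G P) -> F = G.
Proof.
case: F => F hF; case: G => G hG /= H.
have E : F = G by apply: funext.
by subst; congr exist; apply: Prop_irrelevance.
Qed.

Definition mkF (F : seq I -> Bm) (h : coeff_fun F) : FreeExt :=
  exist _ F (introT (asboolP _) h).

Lemma coeff_funI (F G : FreeExt) : coeff_fun (fun P => coeff F P `&` coeff G P).
Proof.
case: (coeffP F) => _ [W1 H1]; case: (coeffP G) => _ [W2 H2].
split; first by move=> P; apply: le_trans (leIl _ _) (coeff_le _ _).
exists (W1 ++ W2).
by apply: determined_onI; [apply: determined_on_catl|apply: determined_on_catr].
Qed.

Lemma coeff_funU (F G : FreeExt) : coeff_fun (fun P => coeff F P `|` coeff G P).
Proof.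
case: (coeffP F) => _ [W1 H1]; case: (coeffP G) => _ [W2 H2].
split; first by move=> P; rewrite leUx !coeff_le.
exists (W1 ++ W2).
by apply: determined_onU; [apply: determined_on_catl|apply: determined_on_catr].
Qed.

Lemma coeff_funC (F : FreeExt) : coeff_fun (fun P => pi P `&` ~` coeff F P).
Proof.
case: (coeffP F) => _ [W H]; split; first by move=> P; apply: leIl.
by exists W; apply: determined_onC => // P; apply: coeff_le.
Qed.

Lemma coeff_fun0 : coeff_fun (fun _ => \bot).
Proof. by split => [P|]; [apply: le0x|exists [::] => P P' _; rewrite !meet0x]. Qed.
Lemma coeff_fun1 : coeff_fun pi.
Proof. by split => [P|] //; exists [::] => P P' _; rewrite meetC. Qed.

Definition fmeet F G := mkF (coeff_funI F G).
Definition fjoin F G := mkF (coeff_funU F G).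
Definition fcompl F := mkF (coeff_funC F).
Definition fbot := mkF coeff_fun0.
Definition ftop := mkF coeff_fun1.

HB.instance Definition _ := gen_eqMixin FreeExt.
HB.instance Definition _ := gen_choiceMixin FreeExt.

Definition fle (X Y : FreeExt) := fmeet X Y == X.
Definition flt (X Y : FreeExt) := (Y != X) && fle X Y.
Fact fle_def X Y : fle X Y = (fmeet X Y == X). Proof. by []. Qed.
Fact flt_def X Y : flt X Y = (Y != X) && fle X Y. Proof. by []. Qed.
Fact fmeetC : commutative fmeet.
Proof. by move=> X Y; apply: coeff_inj => P /=; rewrite meetC. Qed.
Fact fjoinC : commutative fjoin.
Proof. by move=> X Y; apply: coeff_inj => P /=; rewrite joinC. Qed.
Fact fmeetA : associative fmeet.
Proof. by move=> X Y Z; apply: coeff_inj => P /=; rewrite meetA. Qed.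
Fact fjoinA : associative fjoin.
Proof. by move=> X Y Z; apply: coeff_inj => P /=; rewrite joinA. Qed.
Fact fjoinKI : forall Y X, fmeet X (fjoin X Y) = X.
Proof. by move=> Y X; apply: coeff_inj => P /=; rewrite joinKI. Qed.
Fact fmeetKU : forall Y X, fjoin X (fmeet X Y) = X.
Proof. by move=> Y X; apply: coeff_inj => P /=; rewrite meetKU. Qed.
Fact fmeetUl : left_distributive fmeet fjoin.
Proof. by move=> X Y Z; apply: coeff_inj => P /=; rewrite meetUl. Qed.
Fact fmeetxx : idempotent_op fmeet.
Proof. by move=> X; apply: coeff_inj => P /=; rewrite meetxx. Qed.

HB.instance Definition _ := Order.isMeetJoinDistrLattice.Build (Order.Disp tt tt) FreeExt
  fle_def flt_def fmeetC fjoinC fmeetA fjoinA fjoinKI fmeetKU fmeetUl fmeetxx.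

Fact fle0x (X : FreeExt) : fbot <= X.
Proof. by apply/eqP/coeff_inj => P /=; rewrite meet0x. Qed.
Fact flex1 (X : FreeExt) : X <= ftop.
Proof. by apply/eqP/coeff_inj => P /=; rewrite coeffI_rel. Qed.

HB.instance Definition _ := Order.hasBottom.Build (Order.Disp tt tt) FreeExt fle0x.
HB.instance Definition _ := Order.hasTop.Build (Order.Disp tt tt) FreeExt flex1.

Fact fjoinxC (X : FreeExt) : X `|` fcompl X = \top.
Proof.
apply: coeff_inj => P /=; rewrite joinIr (join_r (coeff_le X P)) joinxC meetx1 //.
Qed.
Fact fmeetxC (X : FreeExt) : X `&` fcompl X = \bot.
Proof. by apply: coeff_inj => P /=; rewrite meetCA meetxC meetx0. Qed.

HB.instance Definition _ :=
  Order.TBDistrLattice_hasComplement.Build (Order.Disp tt tt) FreeExt fjoinxC fmeetxC.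

Lemma coeffI (X Y : FreeExt) P : coeff (X `&` Y) P = coeff X P `&` coeff Y P.
Proof. by []. Qed.
Lemma coeffU (X Y : FreeExt) P : coeff (X `|` Y) P = coeff X P `|` coeff Y P.
Proof. by []. Qed.
Lemma coeffC (X : FreeExt) P : coeff (~` X) P = pi P `&` ~` coeff X P. Proof. by []. Qed.
Lemma coeff0 P : coeff (\bot : FreeExt) P = \bot. Proof. by []. Qed.
Lemma coeff1 P : coeff (\top : FreeExt) P = pi P. Proof. by []. Qed.
Lemma fleE (X Y : FreeExt) : X <= Y <-> forall P, coeff X P <= coeff Y P.
Proof.
split.
- by move/eqP => <- P; rewrite coeffI leIr.
- by move=> H; apply/eqP/coeff_inj => P; rewrite coeffI; apply: meet_l.
Qed.
Lemma coeff_joins (T : Type) (F : T -> FreeExt) r P :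
  coeff (\join_(i <- r) F i) P = \join_(i <- r) coeff (F i) P.
Proof. by elim: r => [|x r IH]; rewrite ?big_nil // !big_cons coeffU IH. Qed.
Lemma coeff_fun_embed (c : Bm) : coeff_fun (fun P => c `&` pi P).
Proof.
split; first by move=> P; apply: leIr.
by exists [::] => P P' _; rewrite -!meetA (meetC (pi P)).
Qed.
Definition fembed (c : Bm) : FreeExt := mkF (coeff_fun_embed c).

Lemma coeff_fun_gen (s : I) : coeff_fun (fun P => if inb s P then pi P else \bot).
Proof.
split; last by exists [:: s]; apply: determined_on_gen.
by move=> P; case: ifP => _; rewrite ?le0x.
Qed.
Definition fgen (s : I) : FreeExt := mkF (coeff_fun_gen s).

Lemma fembed_hom : ba_hom fembed.
Proof.
split.
- by move=> x y; apply: coeff_inj => P /=; rewrite meetACA meetxx.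
- by move=> x y; apply: coeff_inj => P /=; rewrite meetUl.
- move=> x; apply: coeff_inj => P /=; rewrite complI meetUr meetxC joinx0 meetC //.
- by apply: coeff_inj => P /=; rewrite meet0x.
- by apply: coeff_inj => P /=; rewrite meet1x.
Qed.

Lemma fgen_rel x1 x2 : fgen (inl x1) `&` fgen (inr x2) <= fembed (a (inl x1) (inr x2)).
Proof.
apply/fleE => P /=.
case: (inbP (inl x1) P) => H1; case: (inbP (inr x2) P) => H2;
  rewrite ?meet0x ?meetx0 ?le0x // meetxx lexI lexx andbT.
exact: (rel_meet_le a H1 H2).
Qed.
End FreeExtension.

Fixpoint bitseqs (n : nat) : seq (seq bool) :=
  if n is n'.+1 then [seq true :: b | b <- bitseqs n'] ++ [seq false :: b | b <- bitseqs n']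
  else [:: [::]].

Lemma bitseqs_size n b : List.In b (bitseqs n) -> size b = n.
Proof.
elim: n b => [|n IH] b /=; first by case=> // <-.
move=> Hb; case: (List.in_app_or _ _ _ Hb) => /List.in_map_iff [b' [<- H]] /=; by rewrite IH.
Qed.

Lemma bitseqs_in b : List.In b (bitseqs (size b)).
Proof.
elim: b => [|c b IH] /=; first by left.
apply: List.in_or_app; case: c; [left|right]; apply/List.in_map_iff; by exists b.
Qed.

Lemma bitseqs_split m n c : List.In c (bitseqs (m + n)) ->
  exists c1 c2, [/\ c = c1 ++ c2, List.In c1 (bitseqs m) & List.In c2 (bitseqs n)].
Proof.
move=> /bitseqs_size Hsz; exists (take m c), (drop m c).
have Hs1 : size (take m c) = m by rewrite size_takel // Hsz leq_addr.
have Hs2 : size (drop m c) = n by rewrite size_drop Hsz addKn.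
split; first by rewrite cat_take_drop.
  by rewrite -[m in bitseqs m]Hs1; exact: bitseqs_in.
by rewrite -[n in bitseqs n]Hs2; exact: bitseqs_in.
Qed.

Lemma mask_In (T : Type) b (W : seq T) x : List.In x (mask b W) -> List.In x W.
Proof.
elim: W b => [|w W IH] [|c b] //=.
by case: c => /= [[->|/IH]|/IH]; [left|right|right].
Qed.

Section Atoms.
Context {T : Type} {d : Order.disp_t} {C : ctbDistrLatticeType d} (z : T -> C).

Fixpoint agrees (W : seq T) (b : seq bool) (P : seq T) : bool :=
  match W, b with
  | w :: W', c :: b' => (inb w P == c) && agrees W' b' P
  | _, _ => true end.

Lemma agrees_mask W b P : size b = size W -> agrees W b P ->
  forall w, List.In w W -> (List.In w (mask b W) <-> List.In w P).
Proof.
elim: W b => [|w W IH] [|c b] //= [Hs] /andP [/eqP Hw Ha] x Hx.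
case: (classic (w = x)) => [E|NE].
- subst x; case: c Hw => Hw /=.
  + by split => _; [apply/inbP; rewrite Hw|left].
  + split => [H|H]; last by move/inbP: H; rewrite Hw.
    by apply/(IH b Hs Ha w (mask_In H)).
- case: Hx => [E|Hx]; first by case: NE.
  rewrite -(IH b Hs Ha x Hx); case: c {Hw} => /=; last by [].
  split; first by case=> [E|H] //; case: NE.
  by move=> H; right.
Qed.

Lemma agrees_pattern W P : agrees W (map (fun w : T => inb w P) W) P.
Proof. by elim: W => //= w W ->; rewrite eqxx. Qed.

Lemma mask_pattern_sub W P x :
  List.In x (mask (map (fun w : T => inb w P) W) W) -> List.In x P.
Proof.
elim: W => //= w W IH; case E: (inb w P) => /=; last exact: IH.
by case=> [<-|/IH //]; apply/inbP.
Qed.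

Lemma agrees_cons W b M (w : T) :
  agrees W b M -> (List.In w W -> List.In w M) ->
  agrees W b (w :: M).
Proof.
elim: W b => [|x W IH] [|c b] //= /andP [/eqP Hx Ha] Hw.
apply/andP; split; last by apply: IH => // H; apply: Hw; right.
apply/eqP; rewrite -Hx; apply/idP/idP => /inbP H; apply/inbP.
- case: H => [E|H] //; subst x; by apply: Hw; left.
- by right.
Qed.

Fixpoint atom (W : seq T) (b : seq bool) : C :=
  match W, b with
  | w :: W', c :: b' => (if c then z w else ~` z w) `&` atom W' b'
  | _, _ => \top end.

Lemma atom_partition W : \join_(b <- bitseqs (size W)) atom W b = \top.
Proof.
elim: W => [|w W IH] /=; first by rewrite big_seq1.
have L : forall x, \join_(b <- bitseqs (size W)) (x `&` atom W b) =
    x `&` \join_(b <- bitseqs (size W)) atom W b.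
  by move=> x; rewrite meetC bigjoin_meetl; apply: eq_bigr => b _; rewrite meetC.
by rewrite big_cat !big_map /= !L IH !meetx1 joinxC.
Qed.

Lemma atom_disj W b c : size b = size W -> size c = size W -> b != c ->
  atom W b `&` atom W c = \bot.
Proof.
elim: W b c => [|w W IH] [|x b] [|y c] //=.
move=> [Hb] [Hc] Hne.
case: (eqVneq x y) => Exy.
- subst y; have Hne' : b != c by apply: contraNneq Hne => ->.
  rewrite meetACA (IH _ _ Hb Hc Hne') meetx0 //.
- rewrite meetACA; apply: le_bot; apply: le_trans (leIl _ _) _.
  by move: Exy Hne; case: x; case: y => //= _ _; rewrite ?meetxC ?meetCx.
Qed.

Lemma atom_le_gen (W : seq T) (b : seq bool) (x : T) : List.In x (mask b W) -> atom W b <= z x.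
Proof.
elim: W b => [|w W IH] [|c b] //=.
case: c => /= [[<-|/IH H]|/IH H]; first exact: leIl.
  exact: le_trans (leIr _ _) H.
exact: le_trans (leIr _ _) H.
Qed.

Lemma atom_le_ngen W b x : size b = size W -> List.In x W -> ~ List.In x (mask b W) ->
  atom W b <= ~` z x.
Proof.
elim: W b => [|w W IH] [|c b] //= [Hs] Hx Hn.
case: (classic (w = x)) => E.
- subst x; case: c Hn => /= Hn; first by case: Hn; left.
  exact: leIl.
- case: Hx => [Ex|Hx]; first by case: E.
  apply: le_trans (leIr _ _) _; apply: IH => // H; apply: Hn.
  by case: c => //=; right.
Qed.

Lemma atom_agrees W b : size b = size W -> atom W b <> \bot -> agrees W b (mask b W).
Proof.
elim: W b => [|w W IH] [|c b] //= [Hs] Hne.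
have Hne' : atom W b <> \bot by move=> E; apply: Hne; rewrite E meetx0.
have IHa := IH b Hs Hne'.
case: c Hne => /= Hne; apply/andP; split.
- by apply/eqP/inbP; left.
- apply: agrees_cons => // Hw; apply: NNPP => Hn; apply: Hne.
  apply: le_bot; rewrite -(meetxC (z w)); apply: leI2 => //; exact: atom_le_ngen.
- apply/eqP; apply/negbTE/negP => /inbP Hin; apply: Hne.
  apply: le_bot; rewrite -(meetCx (z w)); apply: leI2 => //; exact: atom_le_gen.
- exact: IHa.
Qed.

Lemma atom_cat (W1 : seq T) (b1 : seq bool) (W2 : seq T) (b2 : seq bool) : size b1 = size W1 ->
  atom (W1 ++ W2) (b1 ++ b2) = atom W1 b1 `&` atom W2 b2.
Proof.
elim: W1 b1 => [|w W IH] [|c b] //= Hs; first by rewrite meet1x.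
by rewrite IH ?meetA //; case: Hs.
Qed.

Lemma agrees_cat W1 b1 W2 b2 P : size b1 = size W1 ->
  agrees (W1 ++ W2) (b1 ++ b2) P = agrees W1 b1 P && agrees W2 b2 P.
Proof.
elim: W1 b1 => [|w W IH] [|c b] //= Hs.
by rewrite IH ?andbA //; case: Hs.
Qed.

Lemma agrees_same W b P P' : size b = size W -> agrees W b P -> agrees W b P' ->
  forall w, List.In w W -> (List.In w P <-> List.In w P').
Proof.
elim: W b => [|x W IH] [|c b] //= [Hs] /andP [/eqP H1 A1] /andP [/eqP H2 A2] w Hw.
case: (classic (x = w)) => E.
- subst w; split => /inbP H; apply/inbP; [by rewrite H2 -H1|by rewrite H1 -H2].
- case: Hw => [Ew|Hw]; [by case: E|exact: (IH b Hs A1 A2 w Hw)].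
Qed.

End Atoms.

Section FreeExtAtoms.
Context (K1 K2 : Type) {dm : Order.disp_t} {Bm : ctbDistrLatticeType dm}
  (a : K1 + K2 -> K1 + K2 -> Bm).
Notation I := (K1 + K2)%type.
Notation pi := (rel_meet a).
Notation FreeExt := (FreeExt a).
Notation fgen := (fgen a).
Notation fembed := (fembed a).
Notation coeff := (@coeff _ _ _ _ a).

Lemma coeff_atom W b P : coeff (atom fgen W b) P = if agrees W b P then pi P else \bot.
Proof.
elim: W b => [|w W IH] [|c b] //=.
rewrite IH; case: c; rewrite ?coeffC /=;
  case: (inb w P) => /=; case: (agrees W b P);
  rewrite ?meetxx ?meet0x ?meetx0 ?compl0 ?meetx1 ?meetxC ?meet0x ?meetxx //.
Qed.

Lemma free_ext_atoms (F : FreeExt) W : determined_on a W (coeff F) ->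
  F = \join_(b <- bitseqs (size W)) (fembed (coeff F (mask b W)) `&` atom fgen W b).
Proof.
move=> hW; apply: coeff_inj => P; rewrite coeff_joins.
under eq_bigr do rewrite coeffI coeff_atom /=.
apply: le_anti; apply/andP; split.
- pose b0 := map (fun w : I => inb w P) W.
  have Hb0 : List.In b0 (bitseqs (size W)).
    by rewrite -(size_map (fun w : I => inb w P) W); exact: bitseqs_in.
  apply: le_trans (le_bigjoin _ Hb0); rewrite agrees_pattern.
  have E : coeff F (mask b0 W) `&` pi P = coeff F P `&` pi (mask b0 W).
    apply: hW => w Hw; apply: agrees_mask => //; [by rewrite size_map|exact: agrees_pattern].
  rewrite -meetA meetxx E lexI lexx /=.
  apply: le_trans (coeff_le F P) _; apply: rel_meet_sub => x; exact: mask_pattern_sub.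
- apply: bigjoin_le => b Hb; case: ifP => Ha; last by rewrite meetx0 le0x.
  rewrite -meetA meetxx.
  rewrite (hW (mask b W) P) ?leIl // => w Hw.
  exact: agrees_mask (bitseqs_size Hb) Ha w Hw.
Qed.

Lemma free_ext_generated :
  generated_by (fun z : FreeExt => (exists x, z = fembed x) \/ (exists s, z = fgen s)).
Proof.
move=> S H0 Hbot Htop HI HU HC F.
have [_ [W hW]] := coeffP F.
rewrite (free_ext_atoms hW).
elim: (bitseqs (size W)) => [|b L IH]; first by rewrite big_nil.
rewrite big_cons; apply: (HU) => //; apply: (HI); first by apply: (H0); left; eexists.
elim: W b {hW IH} => [|w W IH] [|c b] //=.
apply: (HI) => //; case: c; [|apply: (HC)]; apply: (H0); right; by eexists.
Qed.
End FreeExtAtoms.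


Section FreeExtUniversal.
Context (K1 K2 : Type) {dm : Order.disp_t} {Bm : ctbDistrLatticeType dm}
  (a : K1 + K2 -> K1 + K2 -> Bm).
Notation I := (K1 + K2)%type.
Notation pi := (rel_meet a).
Notation FreeExt := (FreeExt a).
Notation fgen := (fgen a).
Notation fembed := (fembed a).
Notation coeff := (@coeff _ _ _ _ a).
Context {dC : Order.disp_t} {C : ctbDistrLatticeType dC} (g : Bm -> C) (z : I -> C)
  (hg : ba_hom g)
  (hz : forall x1 x2, z (inl x1) `&` z (inr x2) <= g (a (inl x1) (inr x2))).

Lemma atom_le_rel W b : atom z W b <= g (pi (mask b W)).
Proof.
apply: le_trans (meet_gens_le hg hz _); apply: le_bigmeet => s Hs; exact: atom_le_gen.
Qed.

Definition univ_on (W : seq I) (F : FreeExt) : C :=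
  \join_(b <- bitseqs (size W)) (g (coeff F (mask b W)) `&` atom z W b).

Lemma univ_on_atom W F c : List.In c (bitseqs (size W)) ->
  univ_on W F `&` atom z W c = g (coeff F (mask c W)) `&` atom z W c.
Proof.
move=> Hc; rewrite /univ_on bigjoin_meetl; apply: le_anti; apply/andP; split.
- apply: bigjoin_le => b Hb; case: (eqVneq b c) => [->|Hne].
  + by rewrite -meetA meetxx.
  + rewrite -meetA (atom_disj z (bitseqs_size Hb) (bitseqs_size Hc) Hne) meetx0; exact: le0x.
- pose G b := g (coeff F (mask b W)) `&` atom z W b `&` atom z W c.
  by apply: le_trans (le_bigjoin G Hc); rewrite /G -meetA meetxx.
Qed.

Lemma eq_on_atoms W (x x' : C) :
  (forall c, List.In c (bitseqs (size W)) -> x `&` atom z W c = x' `&` atom z W c) -> x = x'.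
Proof.
move=> H.
rewrite -(meetx1 x) -(meetx1 x') -(atom_partition z W) ![_ `&` \join_(_ <- _) _]meetC.
rewrite !bigjoin_meetl; apply: eq_bigjoin_In => c Hc; by rewrite meetC H // meetC.
Qed.

Lemma coeff_restrict W (F : FreeExt) P Q : determined_on a W (coeff F) ->
  (forall w, List.In w W -> (List.In w P <-> List.In w Q)) ->
  (forall x, List.In x P -> List.In x Q) -> coeff F P `&` pi Q = coeff F Q.
Proof.
move=> hW HPQ PQ; rewrite (hW P Q HPQ); apply: meet_l.
by apply: le_trans (coeff_le F Q) _; apply: rel_meet_sub.
Qed.

Lemma univ_on_indep W1 W2 F : determined_on a W1 (coeff F) ->
  determined_on a W2 (coeff F) -> univ_on W1 F = univ_on W2 F.
Proof.
move=> h1 h2; apply: (@eq_on_atoms (W1 ++ W2)) => c; rewrite size_cat.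
case/bitseqs_split => c1 [c2 [-> Hc1 Hc2]].
have Hs1 := bitseqs_size Hc1; have Hs2 := bitseqs_size Hc2.
rewrite atom_cat // meetA (univ_on_atom _ Hc1) (meetC (atom z W1 c1)) meetA.
rewrite (univ_on_atom _ Hc2) -!meetA (meetC (atom z W2 c2)).
set Z12 := atom z W1 c1 `&` atom z W2 c2.
have [->|HZ] := classic (Z12 = \bot); first by rewrite !meetx0.
pose M := mask c1 W1 ++ mask c2 W2.
have EZ : atom z (W1 ++ W2) (c1 ++ c2) = Z12 by rewrite atom_cat.
have EM : mask (c1 ++ c2) (W1 ++ W2) = M by rewrite mask_cat.
have /andP [A1 A2] : agrees W1 c1 M && agrees W2 c2 M.
  rewrite -agrees_cat // -EM; apply: (atom_agrees (z := z)).
    by rewrite !size_cat Hs1 Hs2.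
  by rewrite EZ.
have A1' : agrees W1 c1 (mask c1 W1).
  by apply: (atom_agrees (z := z)) => // E; apply: HZ; rewrite /Z12 E meet0x.
have A2' : agrees W2 c2 (mask c2 W2).
  by apply: (atom_agrees (z := z)) => // E; apply: HZ; rewrite /Z12 E meetx0.
have E1 : coeff F (mask c1 W1) `&` pi M = coeff F M.
  by apply: coeff_restrict h1 (agrees_same Hs1 A1' A1) _ => x Hx; apply: List.in_or_app; left.
have E2 : coeff F (mask c2 W2) `&` pi M = coeff F M.
  by apply: coeff_restrict h2 (agrees_same Hs2 A2' A2) _ => x Hx; apply: List.in_or_app; right.
have Hpi : Z12 <= g (pi M) by rewrite -EZ -EM; exact: atom_le_rel.
have -> : Z12 = g (pi M) `&` Z12 by rewrite meetC; apply/esym/meet_l.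
by rewrite !meetA -!(hom_meet hg) E1 E2.
Qed.

Definition support (F : FreeExt) : seq I := proj1_sig (cid (proj2 (coeffP F))).
Lemma supportP F : determined_on a (support F) (coeff F).
Proof. exact: proj2_sig (cid (proj2 (coeffP F))). Qed.
Definition univ_map (F : FreeExt) : C := univ_on (support F) F.
Lemma univ_map_on W F : determined_on a W (coeff F) -> univ_map F = univ_on W F.
Proof. by move=> H; apply: univ_on_indep => //; exact: supportP. Qed.

Lemma univ_mapI F G : univ_map (F `&` G) = univ_map F `&` univ_map G.
Proof.
pose W := support F ++ support G.
have hF : determined_on a W (coeff F).
  exact: (determined_on_catl (W2 := support G) (supportP (F := F))).
have hG : determined_on a W (coeff G).
  exact: (determined_on_catr (W1 := support F) (supportP (F := G))).
rewrite (univ_map_on (F := F `&` G) (determined_onI hF hG)) (univ_map_on hF) (univ_map_on hG).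
apply: (@eq_on_atoms W) => c Hc.
rewrite univ_on_atom // -(meetxx (atom z W c)) meetACA univ_on_atom // univ_on_atom //.
by rewrite meetACA -(hom_meet hg).
Qed.

Lemma univ_mapU F G : univ_map (F `|` G) = univ_map F `|` univ_map G.
Proof.
pose W := support F ++ support G.
have hF : determined_on a W (coeff F).
  exact: (determined_on_catl (W2 := support G) (supportP (F := F))).
have hG : determined_on a W (coeff G).
  exact: (determined_on_catr (W1 := support F) (supportP (F := G))).
rewrite (univ_map_on (F := F `|` G) (determined_onU hF hG)) (univ_map_on hF) (univ_map_on hG).
apply: (@eq_on_atoms W) => c Hc.
by rewrite univ_on_atom // meetUl univ_on_atom // univ_on_atom // -meetUl -(hom_join hg).
Qed.

Lemma univ_mapC F : univ_map (~` F) = ~` univ_map F.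
Proof.
pose W := support F.
have hF : determined_on a W (coeff F) := supportP (F := F).
have hC : determined_on a W (coeff (~` F)).
  by apply: determined_onC => // P; apply: coeff_le.
rewrite (univ_map_on hC) (univ_map_on hF).
apply: (@eq_on_atoms W) => c Hc.
rewrite univ_on_atom // coeffC (hom_meet hg) (hom_compl hg).
rewrite [RHS]meetC (meet_complIr (univ_on W F)) univ_on_atom // -meet_complIr.
by rewrite meetAC (meet_r (atom_le_rel _ _)).
Qed.

Lemma univ_on_nil F : univ_on [::] F = g (coeff F [::]).
Proof. by rewrite /univ_on /= big_seq1 /= meetx1. Qed.

Lemma univ_map0 : univ_map \bot = \bot.
Proof.
rewrite (@univ_map_on [::]) ?univ_on_nil ?coeff0 ?(hom0 hg) //.
by move=> P P' _; rewrite coeff0 !meet0x.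
Qed.

Lemma univ_map1 : univ_map \top = \top.
Proof.
rewrite (@univ_map_on [::]) ?univ_on_nil ?coeff1 ?rel_meet_nil ?(hom1 hg) //.
by move=> P P' _; rewrite !coeff1 meetC.
Qed.

Lemma univ_map_embed x : univ_map (fembed x) = g x.
Proof.
rewrite (@univ_map_on [::]) ?univ_on_nil /= ?rel_meet_nil ?meetx1 //.
by move=> P P' _ /=; rewrite -!meetA (meetC (pi P)).
Qed.

Lemma univ_map_gen s : univ_map (fgen s) = z s.
Proof.
have Hd : determined_on a [:: s] (coeff (fgen s)) := @determined_on_gen _ _ _ _ a s.
rewrite (univ_map_on Hd) /univ_on /= big_cons big_seq1 /=.
have -> : inb s [:: s] = true by apply/inbP; left.
have -> : inb s [::] = false by apply/inbP; case.
have -> : pi [:: s] = \top by rewrite /rel_meet !big_seq1; clear Hd; case: s.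
by rewrite (hom1 hg) (hom0 hg) meet1x meet0x meetx1 joinx0.
Qed.

Lemma univ_map_hom : ba_hom univ_map.
Proof.
split; [exact: univ_mapI|exact: univ_mapU|exact: univ_mapC|exact: univ_map0|exact: univ_map1].
Qed.
End FreeExtUniversal.

Lemma free_ext_universal (K1 K2 : Type) {dm : Order.disp_t} {Bm : ctbDistrLatticeType dm}
  (a : K1 + K2 -> K1 + K2 -> Bm)
  (dC : Order.disp_t) (C : ctbDistrLatticeType dC)
  (g : Bm -> C) (z : K1 + K2 -> C) : ba_hom g ->
  (forall x1 x2, z (inl x1) `&` z (inr x2) <= g (a (inl x1) (inr x2))) ->
  exists k : FreeExt a -> C, [/\ ba_hom k, (forall x, k (fembed a x) = g x) &
                         (forall s, k (fgen a s) = z s)].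
Proof.
move=> hg hz; exists (univ_map (a:=a) g z); split.
- exact: univ_map_hom.
- exact: univ_map_embed.
- exact: univ_map_gen.
Qed.


Section SimpleExtension.
Context (K1 K2 : Type) (lt1 : rel K1) (lt2 : rel K2)
  (h1 : inf_reg_card lt1) (h2 : inf_reg_card lt2)
  {dm d0 dn : Order.disp_t} {Bm : ctbDistrLatticeType dm}
  {B0 : ctbDistrLatticeType d0} {Bn : ctbDistrLatticeType dn}
  (Dm : Bm -> Prop) (fm : is_filter Dm)
  (a : K1 + K2 -> K1 + K2 -> Bm) (ha : moral_problem lt1 lt2 Dm a)
  (e : Bm -> B0) (y : K1 + K2 -> B0) (he : ba_hom e)
  (hrel : forall x1 x2, y (inl x1) `&` y (inr x2) <= e (a (inl x1) (inr x2)))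
  (huniv : solving_universal a e y)
  (hgen : generated_by (fun z => (exists x, z = e x) \/ (exists s, z = y s)))
  (j : B0 -> Bn) (hj : ba_hom j) (ij : injective j)
  (dj : dense j).
Notation basic := (basic e y).
Notation rel_meet := (rel_meet a).

Definition emb (x : Bm) : Bn := j (e x).

Definition ext_gens (w : Bn) : Prop :=
  (exists v, Dm v /\ w = emb v) \/ (exists s, w = j (y s)).

Lemma emb_hom : ba_hom emb.
Proof. exact: hom_comp he hj. Qed.

Lemma j_le_refl z z' : j z <= j z' -> z <= z'.
Proof. exact: (hom_le_refl hj (hom_eq0 hj ij)). Qed.

Lemma emb_inj : injective emb.
Proof.
move=> x x' E; apply: le_anti; apply/andP; split;
  by apply: (e_le_refl he huniv); apply: j_le_refl; rewrite /emb in E; rewrite E.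
Qed.

Lemma ext_filter_below w : gen_filter ext_gens w ->
  exists c P, Dm c /\ emb c `&` j (meet_gens y P) <= w.
Proof.
move=> [u [Hu Hl]].
suff [c [P [H1 H2]]] : exists c P, Dm c /\ emb c `&` j (meet_gens y P) <= \meet_(g <- u) g.
  by exists c, P; split => //; apply: le_trans Hl.
elim: u Hu {Hl} => [|g u IH] Hu.
  by exists \top, [::]; split; [exact: filterT|rewrite big_nil lex1].
have [c [P [H1 H2]]] := IH (fun g Hg => Hu g (or_intror Hg)).
case: (Hu g (or_introl erefl)) => [[v [Hv ->]]|[s ->]].
- exists (v `&` c), P; split; first exact: filterI.
  rewrite big_cons (hom_meet emb_hom) -meetA lexI leIl /=.
  by apply: le_trans (leIr _ _) H2.
- exists c, (s :: P); split => //.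
  rewrite big_cons /meet_gens big_cons (hom_meet hj) lexI; apply/andP; split.
  + by apply: le_trans (leIr _ _) _; apply: leIl.
  + by apply: le_trans H2; apply: leI2 => //; exact: leIr.
Qed.

Lemma ext_le_emb c P x : emb c `&` j (meet_gens y P) <= emb x -> c `&` rel_meet P <= x.
Proof.
by move=> H; apply: (e_meet_gens_le he huniv); apply: j_le_refl; rewrite (hom_meet hj).
Qed.

Lemma ext_filter_pair_le c1 P1 c2 P2 w1 w2 r :
  emb c1 `&` j (meet_gens y P1) <= w1 -> emb c2 `&` j (meet_gens y P2) <= w2 ->
  w1 `&` w2 <= emb r -> c1 `&` c2 `&` rel_meet (P1 ++ P2) <= r.
Proof.
move=> H1 H2 H3; apply: ext_le_emb; apply: le_trans H3.
rewrite (hom_meet emb_hom) meet_gens_cat (hom_meet hj).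
apply: le_trans _ (leI2 H1 H2).
by rewrite -!meetA; apply: leI2 => //; rewrite meetCA; apply: leI2.
Qed.

Context (Dn : Bn -> Prop) (hDn : forall x, Dn x <-> gen_filter ext_gens x).

Lemma Dn_filter : is_filter Dn.
Proof.
have [H1 H2 H3] := gen_filter_filter ext_gens.
split; first by apply/hDn.
- by move=> x x' /hDn Hx le; apply/hDn; apply: H2 Hx le.
- by move=> x x' /hDn Hx /hDn Hx'; apply/hDn; apply: H3.
Qed.

Lemma Dm_emb x : Dm x <-> Dn (emb x).
Proof.
split => [Hx|/hDn /ext_filter_below [c [P [Hc Hl]]]].
  by apply/hDn; apply: gen_filter_gen; left; exists x.
case: fm => _ Hup _; apply: Hup (filterI fm Hc (rel_meet_D fm ha P)) _.
exact: ext_le_emb.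
Qed.

Lemma emb_regular (S : Bm -> Prop) x : is_lub S x ->
  is_lub (fun w => exists z, S z /\ w = emb z) (emb x).
Proof.
move=> lub_x; split.
  by move=> w [z [Hz ->]]; apply: (hom_le emb_hom); apply: (proj1 lub_x).
move=> w Hw; apply: NNPP => Hn.
have Hne : emb x `&` ~` w <> \bot by move=> E; apply: Hn; rewrite -meet_compl_eq0 E.
have [q [Hq0 Hq]] := dj Hne.
have [c [P [N [Hb0 Hbq]]]] := basic_below he hgen Hq0.
have Hjb : j (basic c P N) <= emb x `&` ~` w by apply: le_trans Hq; apply: hom_le.
have Hbx : basic c P N <= e x by apply: j_le_refl; apply: le_trans Hjb (leIl _ _).
have [Hdisj _] := basic_neq0 he hrel Hb0.
have Hb1 : basic (c `&` x) P N <> \bot by rewrite -(basic_meet_e y he) (meet_l Hbx).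
have [_ Hcx] := basic_neq0 he hrel Hb1.
have [s Ss Hs] : exists2 s, S s & c `&` rel_meet P `&` s <> \bot.
  by apply: (lub_meet_neq0 lub_x); rewrite meetAC.
apply: Hs; rewrite meetAC; apply: (basic_eq0 huniv Hdisj).
apply: (hom_eq0 hj ij); rewrite -(basic_meet_e y he) (hom_meet hj).
apply: le_bot; rewrite -(meetCx w); apply: leI2; first exact: le_trans Hjb (leIr _ _).
by apply: Hw; exists s.
Qed.

Lemma Bn_chain_cond (K : Type) (ltK : rel K) (hK : inf_reg_card ltK)
  (hcm : chain_cond Bm K) (hKK : card_lt (K1 + K2) K) : chain_cond Bn K.
Proof.
move=> A [A0 Adisj] [f [fi fA]].
have hT k : exists t : Bm * seq (K1 + K2) * seq (K1 + K2),
    basic t.1.1 t.1.2 t.2 <> \bot /\ j (basic t.1.1 t.1.2 t.2) <= f k.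
  have [q [Hq0 Hq]] := dj (A0 _ (fA k)).
  have [c [P [N [Hb Hbq]]]] := basic_below he hgen Hq0.
  by exists (c, P, N); split => //; apply: le_trans Hq; exact: hom_le hj _ _ Hbq.
have [T HT] := choice hT.
have nI : card_le nat (K1 + K2).
  by have [f0 f0i] := reg_nat_le h1; exists (inl \o f0) => n m [] /f0i.
(* There are fewer than [K] pairs [(P, N)], so [K] many basic elements share them. *)
have [P0 HP0] := seq_fiber hK (proj2 hKK) nI (fun k => (T k).1.2) (unboundedT hK).
have [N0 HN0] := seq_fiber hK (proj2 hKK) nI (fun k => (T k).2) HP0.
have [rho [rhoi Hrho]] := reg_unbounded_card hK HN0.
pose c k := (T (rho k)).1.1.
have Hbk k : basic (c k) P0 N0 <> \bot /\ j (basic (c k) P0 N0) <= f (rho k).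
  by case: (Hrho k) => [[_ /= <-] /= <-]; exact: HT.
apply: (chain_cond_family (F := fun k => c k `&` rel_meet P0) hcm).
  by move=> k; exact: (proj2 (basic_neq0 he hrel (proj1 (Hbk k)))).
move=> k k' Hkk; apply: (basic_disjoint he hrel huniv (proj1 (Hbk k))).
apply: (hom_eq0 hj ij); apply: le_bot.
rewrite -(Adisj _ _ (fA _) (fA _) (fun E => Hkk (rhoi _ _ (fi _ _ E)))) (hom_meet hj).
by apply: leI2; [exact: (proj2 (Hbk k))|exact: (proj2 (Hbk k'))].
Qed.

Lemma ext_no_new_solution (T1 T2 : Type) (lt1' : rel T1) (lt2' : rel T2)
  (a' : T1 + T2 -> T1 + T2 -> Bm) (hT1 : inf_reg_card lt1') (hT2 : inf_reg_card lt2')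
  (ha' : moral_problem lt1' lt2' Dm a') (hns : ~ has_solution Dm a') :
  (~ equinumerous T1 K1 /\ ~ equinumerous T1 K2) \/
  (~ equinumerous T2 K1 /\ ~ equinumerous T2 K2) ->
  ~ has_solution Dn (fun s t => emb (a' s t)).
Proof.
move=> cond [b' [Hb' Hsol]]; apply: hns.
have Ex s : exists p : Bm * seq (K1 + K2), Dm p.1 /\ emb p.1 `&` j (meet_gens y p.2) <= b' s.
  by have [c [P HcP]] := ext_filter_below (proj1 (hDn _) (Hb' s)); exists (c, P).
have [Q HQ] := choice Ex.
apply: (solution_of_bounded h1 h2 fm ha hT1 hT2 ha' (dd := fun s => (Q s).1)
  (P := fun s => (Q s).2)) cond.
- by move=> s; case: (HQ s).
- move=> x x'; apply: (ext_filter_pair_le (proj2 (HQ (inl x))) (proj2 (HQ (inr x')))).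
  exact: Hsol.
Qed.
End SimpleExtension.

Lemma presentation_iso (K1 K2 : Type) {dm d0 d0' : Order.disp_t}
  {Bm : ctbDistrLatticeType dm} {B0 : ctbDistrLatticeType d0}
  {B0' : ctbDistrLatticeType d0'} (a : K1 + K2 -> K1 + K2 -> Bm)
  (e : Bm -> B0) (y : K1 + K2 -> B0) (e' : Bm -> B0') (y' : K1 + K2 -> B0') :
  ba_hom e -> ba_hom e' ->
  (forall x1 x2, y (inl x1) `&` y (inr x2) <= e (a (inl x1) (inr x2))) ->
  (forall x1 x2, y' (inl x1) `&` y' (inr x2) <= e' (a (inl x1) (inr x2))) ->
  solving_universal a e y -> solving_universal a e' y' ->
  generated_by (fun z => (exists x, z = e x) \/ (exists s, z = y s)) ->
  generated_by (fun z => (exists x, z = e' x) \/ (exists s, z = y' s)) ->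
  exists k : B0 -> B0', exists k' : B0' -> B0,
    [/\ ba_hom k, cancel k k', cancel k' k, (forall x, k (e x) = e' x) &
        forall s, k (y s) = y' s].
Proof.
move=> he he' hrel hrel' huniv huniv' hgen hgen'.
have [k [hk ke ky]] := huniv _ _ e' y' he' hrel'.
have [k' [hk' ke' ky']] := huniv' _ _ e y he hrel.
exists k, k'; split => //.
- apply: (generated_hom_eq hgen (hom_comp hk hk') ba_hom_id).
  by move=> z [[x ->]|[s ->]] /=; rewrite ?ke ?ke' ?ky ?ky'.
- apply: (generated_hom_eq hgen' (hom_comp hk' hk) ba_hom_id).
  by move=> z [[x ->]|[s ->]] /=; rewrite ?ke ?ke' ?ky ?ky'.
Qed.

Section MainTheorem.
Context (K1 K2 : Type) {dm : Order.disp_t} {Bm : ctbDistrLatticeType dm}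
  (Dm : Bm -> Prop) (a : K1 + K2 -> K1 + K2 -> Bm).

Lemma simple_solving_ext_exists : exists (dn : Order.disp_t)
  (Bn : ctbDistrLatticeType dn) (Dn : Bn -> Prop) (h : Bm -> Bn),
  simple_solving_ext Dm a Dn h.
Proof.
pose j := @cembed _ (FreeExt a).
exists _, (Completion (FreeExt a)), (gen_filter (ext_gens Dm (fembed a) (fgen a) j)).
exists (emb (fembed a) j), _, (FreeExt a), (fembed a), (fgen a), j; split => //.
- split; [exact: fembed_hom|exact: fgen_rel|exact: free_ext_generated|].
  exact: free_ext_universal.
- split; [exact: completion_complete|exact: cembed_hom|exact: cembed_inj|].
  exact: cembed_dense.
Qed.

Lemma simple_solving_ext_unique {dn dn' : Order.disp_t}
  (Bn : ctbDistrLatticeType dn) (Bn' : ctbDistrLatticeType dn')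
  (Dn : Bn -> Prop) (Dn' : Bn' -> Prop) (h : Bm -> Bn) (h' : Bm -> Bn') :
  simple_solving_ext Dm a Dn h -> simple_solving_ext Dm a Dn' h' ->
  exists iso : Bn -> Bn', [/\ ba_hom iso, bijective iso,
    (forall x, iso (h x) = h' x) & (forall x, Dn x <-> Dn' (iso x))].
Proof.
move=> [d0 [B0 [e [y [j [[he hrel hgen huniv] [cn hj ij dj] Eh HDn]]]]]]
  [d0' [B0' [e' [y' [j' [[he' hrel' hgen' huniv'] [cn' hj' ij' dj'] Eh' HDn']]]]]].
have [k [k' [hk kK k'K ke ky]]] :=
  presentation_iso he he' hrel hrel' huniv huniv' hgen hgen'.
have dnY : dense (j' \o k).
  move=> x /dj' [q [Hq0 Hq]]; exists (k' q); split; last by rewrite /= k'K.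
  by move=> E; apply: Hq0; rewrite -(k'K q) E (hom0 hk).
have [f [hf [finv f1 f2] fj]] := completion_iso hj (hom_comp hk hj') ij
  (inj_comp ij' (can_inj kK)) dj dnY cn cn'.
have fh x : f (h x) = h' x by rewrite Eh fj /= ke Eh'.
exists f; split => //; first by exists finv.
move=> x; rewrite HDn HDn'; apply: gen_filter_map => //; first exact: can_inj f1.
- move=> w [[v [Hv ->]]|[s ->]]; first by left; exists v; rewrite fh.
  by right; exists s; rewrite fj /= ky.
- move=> w [[v [Hv ->]]|[s ->]]; first by exists (h v); split; [left; exists v|].
  by exists (j (y s)); split; [right; exists s|rewrite fj /= ky].
Qed.

Context (lt1 : rel K1) (lt2 : rel K2) (h1 : inf_reg_card lt1) (h2 : inf_reg_card lt2)
  (fm : is_filter Dm) (ha : moral_problem lt1 lt2 Dm a).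

Lemma simple_solving_ext_props (K : Type) (ltK : rel K) (hK : inf_reg_card ltK)
  (hcm : chain_cond Bm K) (hKK : card_lt (K1 + K2) K) {dn : Order.disp_t}
  (Bn : ctbDistrLatticeType dn) (Dn : Bn -> Prop) (h : Bm -> Bn) :
  complete_ba Bm -> simple_solving_ext Dm a Dn h ->
  [/\ in_Kba K Dn, le_ba K Dm Dn h &
      forall (T1 T2 : Type) (lt1' : rel T1) (lt2' : rel T2)
             (a' : T1 + T2 -> T1 + T2 -> Bm),
        inf_reg_card lt1' -> inf_reg_card lt2' ->
        moral_problem lt1' lt2' Dm a' -> ~ has_solution Dm a' ->
        (~ equinumerous T1 K1 /\ ~ equinumerous T1 K2) \/
        (~ equinumerous T2 K1 /\ ~ equinumerous T2 K2) ->
        ~ has_solution Dn (fun s t => h (a' s t))].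
Proof.
move=> cm [d0 [B0 [e [y [j [[he hrel hgen huniv] [cn hj ij dj] Eh HDn]]]]]].
have Eh' : h = emb e j := funext Eh; subst h.
have inKn : in_Kba K Dn.
  split => //; first exact: (Bn_chain_cond h1 he hrel huniv hgen hj ij dj hK hcm hKK).
  exact: (Dn_filter HDn).
split => //.
- split; first by split.
  split => //; split; [exact: emb_hom|exact: (emb_inj he huniv hj ij)| |].
  + by move=> S x; exact: (emb_regular he hrel huniv hgen hj ij dj).
  + by move=> x; exact: (Dm_emb fm ha he huniv hj ij HDn x).
- move=> T1 T2 lt1' lt2' a' hT1 hT2 ha' hns.
  exact: (ext_no_new_solution h1 h2 fm ha he huniv hj ij HDn hT1 hT2 ha' hns).
Qed.
End MainTheorem.

Theorem claim4p9
  (K : Type) (ltK : rel K) (hK : inf_reg_card ltK)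
  (dm : Order.disp_t) (Bm : ctbDistrLatticeType dm) (Dm : Bm -> Prop)
  (hm : in_Kba K Dm)
  (K1 K2 : Type) (lt1 : rel K1) (lt2 : rel K2)
  (hK1 : inf_reg_card lt1) (hK2 : inf_reg_card lt2)
  (hKK : card_lt (K1 + K2) K)
  (a : K1 + K2 -> K1 + K2 -> Bm) (ha : moral_problem lt1 lt2 Dm a) :
  (* (1) existence *)
  (exists (dn : Order.disp_t) (Bn : ctbDistrLatticeType dn) (Dn : Bn -> Prop)
          (h : Bm -> Bn), simple_solving_ext Dm a Dn h) /\
  (* (1) uniqueness up to isomorphism over B_m *)
  (forall (dn dn' : Order.disp_t) (Bn : ctbDistrLatticeType dn)
          (Bn' : ctbDistrLatticeType dn') (Dn : Bn -> Prop) (Dn' : Bn' -> Prop)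
          (h : Bm -> Bn) (h' : Bm -> Bn'),
     simple_solving_ext Dm a Dn h -> simple_solving_ext Dm a Dn' h' ->
     exists iso : Bn -> Bn', [/\ ba_hom iso, bijective iso,
        (forall x, iso (h x) = h' x) & (forall x, Dn x <-> Dn' (iso x))]) /\
  (* (2) and (3) for any simple a-solving extension *)
  (forall (dn : Order.disp_t) (Bn : ctbDistrLatticeType dn) (Dn : Bn -> Prop)
          (h : Bm -> Bn), simple_solving_ext Dm a Dn h ->
     [/\ in_Kba K Dn, le_ba K Dm Dn h &
         forall (T1 T2 : Type) (lt1' : rel T1) (lt2' : rel T2)
                (a' : T1 + T2 -> T1 + T2 -> Bm),
           inf_reg_card lt1' -> inf_reg_card lt2' ->
           moral_problem lt1' lt2' Dm a' -> ~ has_solution Dm a' ->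
           (~ equinumerous T1 K1 /\ ~ equinumerous T1 K2) \/
           (~ equinumerous T2 K1 /\ ~ equinumerous T2 K2) ->
           ~ has_solution Dn (fun s t => h (a' s t))]).
Proof.
case: hm => cm ccm fm.
split; [exact: simple_solving_ext_exists|split].
- by move=> dn dn' Bn Bn' Dn Dn' h h'; exact: simple_solving_ext_unique.
- by move=> dn Bn Dn h; apply: (simple_solving_ext_props hK1 hK2 fm ha hK ccm hKK cm).
Qed.
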